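(* Let $(\Lambda,d)$ be a finitely aligned $k$-graph. The map $\Psi:S_\Lambda\to{\mathcal G}_\Lambda^{op}$, $\Psi(F)=\{[F,x]:x\in D_F\}$, is an injective $*$-homomorphism of inverse semigroups.
   Context: A $k$-graph $(\Lambda,d)$ is a countable small category $\Lambda$ (objects identified with identity morphisms) with a functor $d:\Lambda\to\mathbb N^k$ satisfying unique factorization: whenever $d(\lambda)=m+n$ there are unique $\mu,\nu$ with $d(\mu)=m$, $d(\nu)=n$, $\lambda=\mu\nu$. $r,s$ range/source. $\Lambda^{\min}(\lambda,\mu)=\{(\alpha,\beta):\lambda\alpha=\mu\beta,\ d(\lambda\alpha)=d(\lambda)\vee d(\mu)\}$; finitely aligned means all are finite. $S_\Lambda$: finite $F\subseteq\{(\lambda,\mu):s(\lambda)=s(\mu)\}$ with distinct $(\lambda,\mu),(\nu,\omega)\in F$ satisfying $\Lambda^{\min}(\lambda,\nu)=\Lambda^{\min}(\mu,\omega)=\emptyset$; inverse semigroup with $FG=\bigcup_{(\lambda,\mu)\in F,(\xi,\eta)\in G}\{(\lambda\alpha,\eta\beta):(\alpha,\beta)\in\Lambda^{\min}(\mu,\xi)\}$, $F^*=\{(\mu,\lambda):(\lambda,\mu)\in F\}$, idempotents $E(S_\Lambda)$. $\Omega_{k,m}$ ($m\in(\mathbb N\cup\{\infty\})^k$): objects $\{p\in\mathbb N^k:p\le m\}$, morphisms $(p,q)$, $p\le q\le m$, $r(p,q)=p$, $s(p,q)=q$, $d(p,q)=q-p$. $X_\Lambda$ = degree-preserving functors $x:\Omega_{k,m}\to\Lambda$,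 $d(x)=m$, $r(x)=x(0,0)$; paths $\lambda$ are regarded as elements of $X_\Lambda$ via $x_\lambda:\Omega_{k,d(\lambda)}\to\Lambda$, $x_\lambda(0,d(\lambda))=\lambda$. $\sigma^m x(p,q)=x(p+m,q+m)$; $\lambda x$ ($s(\lambda)=x(0,0)$) has $(\lambda x)(0,n)=\lambda x(0,n-d(\lambda))$. $D_F=\{x:\exists(\lambda,\mu)\in F,\ x(0,d(\mu))=\mu\}$; $\theta_F(x)=\lambda\sigma^{d(\mu)}x$. $X_\Lambda$ carries the topology with subbasis $\{D_F,X_\Lambda\setminus D_F\}$. ${\mathcal G}_\Lambda$: germs $[F,x]$ of pairs $(F,x)$, $x\in D_F$, under $(F,x)\sim(G,y)$ iff $x=y$ and some $P\in E(S_\Lambda)$ has $x\in D_P$, $FP=GP$; product $[F,\theta_G(x)][G,x]=[FG,x]$, inverse $[F^*,\theta_F(x)]$, $r([F,x])=\theta_F(x)$, $s([F,x])=x$; topology with subbasis $\{\Psi(F),{\mathcal G}_\Lambda\setminus\Psi(F)\}$. For a topological groupoid $G$, $G^{op}$ is the family of open Hausdorff subsets $A\subseteq G$ such that $r|_A$ and $s|_A$ are homeomorphisms onto their images; it is an inverse semigroup under $AB=\{ab:a\in A,b\in B,(a,b)\text{ composable}\}$ and $A^*=A^{-1}$. *)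

From mathcomp Require Import all_boot.
From Stdlib Require Import List ClassicalEpsilon.

Set Implicit Arguments.
Unset Strict Implicit.
Unset Printing Implicit Defensive.

Definition pset (T : Type) := T -> Prop.
Definition setC (T : Type) (A : pset T) : pset T := fun x => ~ A x.
Definition img (T U : Type) (f : T -> U) (A : pset T) : pset U :=
  fun y => exists a, A a /\ y = f a.

Definition zerov (k : nat) : 'I_k -> nat := fun _ => 0.
Definition addv (k : nat) (p q : 'I_k -> nat) : 'I_k -> nat := fun i => p i + q i.
Definition subv (k : nat) (p q : 'I_k -> nat) : 'I_k -> nat := fun i => p i - q i.
Definition joinv (k : nat) (p q : 'I_k -> nat) : 'I_k -> nat := fun i => maxn (p i) (q i).
Definition lev (k : nat) (p q : 'I_k -> nat) : Prop := forall i, p i <= q i.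
(** Degrees in (N u {oo})^k: [None] stands for [oo]. *)
Definition le_inf (k : nat) (p : 'I_k -> nat) (m : 'I_k -> option nat) : Prop :=
  forall i, match m i with Some n => is_true (p i <= n) | None => True end.

(** A k-graph: a countable small category (objects identified with identity
    morphisms, i.e. the morphisms [o] with [rg o = o]) with a degree functor
    [dg] into N^k satisfying unique factorisation.  [cmp l m] is the
    composite [l m] (only meaningful when [sr l = rg m]). *)
Record kgraph (k : nat) := KGraph {
  Mor : Type;
  rg : Mor -> Mor;
  sr : Mor -> Mor;
  cmp : Mor -> Mor -> Mor;
  dg : Mor -> 'I_k -> nat;
  kg_countable : exists f : Mor -> nat, injective f;
  rg_rg : forall l, rg (rg l) = rg l;
  sr_rg : forall l, sr (rg l) = rg l;
  rg_sr : forall l, rg (sr l) = sr l;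
  sr_sr : forall l, sr (sr l) = sr l;
  rg_cmp : forall l m, sr l = rg m -> rg (cmp l m) = rg l;
  sr_cmp : forall l m, sr l = rg m -> sr (cmp l m) = sr m;
  cmp_id_l : forall l, cmp (rg l) l = l;
  cmp_id_r : forall l, cmp l (sr l) = l;
  cmpA : forall l m n, sr l = rg m -> sr m = rg n ->
           cmp (cmp l m) n = cmp l (cmp m n);
  dg_cmp : forall l m, sr l = rg m -> dg (cmp l m) = addv (dg l) (dg m);
  unique_fact : forall l (m n : 'I_k -> nat), dg l = addv m n ->
    exists! p : Mor * Mor,
      sr p.1 = rg p.2 /\ dg p.1 = m /\ dg p.2 = n /\ l = cmp p.1 p.2
}.

Section KGraph.
Variables (k : nat) (L : kgraph k).

Local Notation M := (Mor L).

Definition Lmin (l m : M) : pset (M * M) := fun a =>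
  sr l = rg a.1 /\ sr m = rg a.2 /\
  cmp l a.1 = cmp m a.2 /\
  dg (cmp l a.1) = joinv (dg l) (dg m).

Definition finitely_aligned : Prop :=
  forall l m : M, exists s : list (M * M), forall a, Lmin l m a <-> In a s.

Definition in_SL (F : pset (M * M)) : Prop :=
  (exists s : list (M * M), forall p, F p -> In p s) /\
  (forall p, F p -> sr p.1 = sr p.2) /\
  (forall p q, F p -> F q -> p <> q ->
     (forall a, ~ Lmin p.1 q.1 a) /\ (forall a, ~ Lmin p.2 q.2 a)).

Definition smul (F G : pset (M * M)) : pset (M * M) := fun c =>
  exists p q a, F p /\ G q /\ Lmin p.2 q.1 a /\
                c = (cmp p.1 a.1, cmp q.2 a.2).

Definition sstar (F : pset (M * M)) : pset (M * M) := fun c => F (c.2, c.1).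

Definition idempotent_SL (P : pset (M * M)) : Prop := in_SL P /\ smul P P = P.

(** The path space X_Lambda: degree-preserving functors
    x : Omega_{k,m} -> Lambda.  [kp_deg x] is m, and [kp_map x p q] is
    [Some (x(p,q))] when p <= q <= m and [None] otherwise. *)
Record kpath := KPath {
  kp_deg : 'I_k -> option nat;
  kp_map : ('I_k -> nat) -> ('I_k -> nat) -> option M;
  kp_dom : forall p q, kp_map p q <> None <-> lev p q /\ le_inf q kp_deg;
  kp_dg : forall p q l, kp_map p q = Some l -> dg l = subv q p;
  kp_rg : forall p q l, kp_map p q = Some l -> kp_map p p = Some (rg l);
  kp_sr : forall p q l, kp_map p q = Some l -> kp_map q q = Some (sr l);
  kp_cmp : forall p q t l m, kp_map p q = Some l -> kp_map q t = Some m ->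
             kp_map p t = Some (cmp l m)
}.

(** sigma^m x, with sigma^m x (p,q) = x(p+m, q+m)  (meaningful for m <= d(x)). *)
Definition shift (m : 'I_k -> nat) (x : kpath) : kpath :=
  epsilon (inhabits x) (fun y =>
    kp_deg y = (fun i => omap (fun n => n - m i) (kp_deg x i)) /\
    forall p q, kp_map y p q = kp_map x (addv p m) (addv q m)).

(** l x, with (l x)(0,n) = l x(0, n - d(l))  (meaningful for s(l) = x(0,0)). *)
Definition concat (l : M) (x : kpath) : kpath :=
  epsilon (inhabits x) (fun y =>
    kp_deg y = (fun i => omap (fun n => dg l i + n) (kp_deg x i)) /\
    forall n, lev (dg l) n -> le_inf n (kp_deg y) ->
      kp_map y (@zerov k) n =
      omap (cmp l) (kp_map x (@zerov k) (subv n (dg l)))).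

Definition DF (F : pset (M * M)) : pset kpath := fun x =>
  exists p, F p /\ kp_map x (@zerov k) (dg p.2) = Some p.2.

(** theta_F(x) = l sigma^{d(m)} x for the (l,m) in F with x(0,d(m)) = m. *)
Definition theta (F : pset (M * M)) (x : kpath) : kpath :=
  epsilon (inhabits x) (fun y =>
    exists p, F p /\ kp_map x (@zerov k) (dg p.2) = Some p.2 /\
              y = concat p.1 (shift (dg p.2) x)).

Definition gen_open (T : Type) (S : pset (pset T)) (U : pset T) : Prop :=
  forall x, U x -> exists l : list (pset T),
    (forall V, In V l -> S V) /\ (forall V, In V l -> V x) /\
    (forall y, (forall V, In V l -> V y) -> U y).

Definition X_open : pset (pset kpath) :=
  gen_open (fun V => exists F, in_SL F /\ (V = DF F \/ V = setC (DF F))).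

Definition valid (F : pset (M * M)) (x : kpath) : Prop := in_SL F /\ DF F x.

Definition germ_equiv (Fx Gy : pset (M * M) * kpath) : Prop :=
  Fx.2 = Gy.2 /\
  exists P, idempotent_SL P /\ DF P Fx.2 /\ smul Fx.1 P = smul Gy.1 P.

Definition germ_class (F : pset (M * M)) (x : kpath) : pset (pset (M * M) * kpath) :=
  fun Gy => valid Gy.1 Gy.2 /\ germ_equiv (F, x) Gy.

Definition germ : Type :=
  { c : pset (pset (M * M) * kpath) | exists F x, valid F x /\ c = germ_class F x }.

Definition is_germ_of (g : germ) (F : pset (M * M)) (x : kpath) : Prop :=
  valid F x /\ proj1_sig g = germ_class F x.

Lemma germ_inh (g : germ) : inhabited kpath.
Proof. destruct g as [c [F [x _]]]; exact (inhabits x). Qed.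

Definition germ_s (g : germ) : kpath :=
  epsilon (germ_inh g) (fun x => exists F, is_germ_of g F x).

Definition germ_r (g : germ) : kpath :=
  epsilon (germ_inh g) (fun y => exists F x, is_germ_of g F x /\ y = theta F x).

(** [F, theta_G(x)] [G, x] = [FG, x]  (for composable germs). *)
Definition germ_mul (a b : germ) : germ :=
  epsilon (inhabits a) (fun c => exists F G x,
    is_germ_of b G x /\ is_germ_of a F (theta G x) /\ is_germ_of c (smul F G) x).

Definition germ_inv (a : germ) : germ :=
  epsilon (inhabits a) (fun c => exists F x,
    is_germ_of a F x /\ is_germ_of c (sstar F) (theta F x)).

Definition Psi (F : pset (M * M)) : pset germ := fun g =>
  exists x, DF F x /\ is_germ_of g F x.

Definition G_open : pset (pset germ) :=
  gen_open (fun V => exists F, in_SL F /\ (V = Psi F \/ V = setC (Psi F))).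

End KGraph.

Definition rel_open (T : Type) (opn : pset (pset T)) (A V : pset T) : Prop :=
  exists U, opn U /\ forall x, V x <-> (U x /\ A x).

Definition hausdorff_in (T : Type) (opn : pset (pset T)) (A : pset T) : Prop :=
  forall a b, A a -> A b -> a <> b ->
    exists U V, opn U /\ opn V /\ U a /\ V b /\
      (forall c, A c -> U c -> V c -> False).

Definition homeo_onto_image (T U : Type) (opT : pset (pset T)) (opU : pset (pset U))
    (A : pset T) (f : T -> U) : Prop :=
  (forall a b, A a -> A b -> f a = f b -> a = b) /\
  (forall W, opU W -> rel_open opT A (fun a => A a /\ W (f a))) /\
  (forall V, (forall a, V a -> A a) -> rel_open opT A V ->
     rel_open opU (img f A) (img f V)).

Section Gop.
Variables (k : nat) (L : kgraph k).

(** G_Lambda^op : open Hausdorff bisections. *)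
Definition in_Gop (A : pset (germ L)) : Prop :=
  @G_open k L A /\ hausdorff_in (@G_open k L) A /\
  homeo_onto_image (@G_open k L) (@X_open k L) A (@germ_r k L) /\
  homeo_onto_image (@G_open k L) (@X_open k L) A (@germ_s k L).

Definition gop_mul (A B : pset (germ L)) : pset (germ L) := fun c =>
  exists a b, A a /\ B b /\ germ_s a = germ_r b /\ c = germ_mul a b.

Definition gop_inv (A : pset (germ L)) : pset (germ L) := fun c =>
  exists a, A a /\ c = germ_inv a.

End Gop.

From Pilot Require Import Defs.
From mathcomp Require Import all_boot zify.
From Stdlib Require Import List ClassicalEpsilon.
From Stdlib Require Import FunctionalExtensionality PropExtensionality ProofIrrelevance.

Set Implicit Arguments.
Unset Strict Implicit.
Unset Printing Implicit Defensive.

(* A germ [F, x] only depends on how F acts near x: for valid pairs (F, x) and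
   (G, x), with (l, m) in F and (l', m') in G selected by x, the germs agree
   exactly when l x(d m, N) = l' x(d m', N) for one (equivalently every) large
   enough N, and the idempotent realising the equivalence is the singleton
   {(x(0,N), x(0,N))}.  With this description the algebra is bookkeeping:
   D_{FG} = D_G n theta_G^{-1}(D_F), theta_{FG} = theta_F o theta_G and
   theta_{F*} inverts theta_F, so Psi is a *-homomorphism; evaluating Psi F at
   the finite paths x_m, (l, m) in F, recovers F.  Finite alignment is what
   keeps S_Lambda closed under products.  Topologically, Psi F is subbasic, s
   maps it bijectively onto D_F and r onto D_{F*}; the preimages of subbasic
   sets D_H under s and r are Psi (F Q) with Q the source idempotent
   {(m, m) : (l, m) in H} of H, resp. of H F, and the images of subbasic sets
   of germs are locally of the form D_H, resp. D_{H F*}.  Distinct paths are separated by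
   cylinders D_{(v,v)}, whence the Hausdorff property. *)

Tactic Notation "vext" ident(i) := apply functional_extensionality; intro i.

Lemma pset_ext (T : Type) (A B : pset T) : (forall a, A a <-> B a) -> A = B.
Proof. by move=> H; apply: functional_extensionality => a; apply: propositional_extensionality. Qed.

Lemma In_list_choice (A B : Type) (R : A -> B -> Prop) (l : list A) :
  (forall a, In a l -> exists b, R a b) ->
  exists l' : list B, (forall b, In b l' -> exists2 a, In a l & R a b) /\
                      (forall a, In a l -> exists2 b, In b l' & R a b).
Proof.
elim: l => [_ | a l IH H]; first by exists nil.
have [b Rab] := H a (or_introl erefl).
have [l' [H1 H2]] := IH (fun a' Ha' => H a' (or_intror Ha')).
exists (b :: l'); split=> [b' [<- | /H1 [a' Ha' R']] | a' [<- | /H2 [b' Hb' R']]].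
- by exists a; [left|].
- by exists a'; [right|].
- by exists b; [left|].
- by exists b'; [right|].
Qed.

Lemma gen_open_subbasic (T : Type) (S : pset (pset T)) V : S V -> gen_open S V.
Proof.
move=> HV x Vx; exists [:: V].
by split; [|split]; [move=> V' [<- | []] | move=> V' [<- | []] | move=> y; apply; left].
Qed.

(* Continuity on [A] only needs to be checked on a subbasis. *)
Lemma gen_open_preimage (T U : Type) (ST : pset (pset T)) (SU : pset (pset U)) (A : pset T)
    (f : T -> U) : ST A ->
  (forall W, SU W -> exists W', ST W' /\ forall c, A c -> (W' c <-> W (f c))) ->
  forall W, gen_open SU W -> gen_open ST (fun c => A c /\ W (f c)).
Proof.
move=> HA HW W HWo c [Ac Wc]; have [l [l1 [l2 l3]]] := HWo _ Wc.
have [l' [H1 H2]] := In_list_choice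
  (R := fun (V : pset U) (W' : pset T) => ST W' /\ forall c, A c -> (W' c <-> V (f c)))
  (fun V HV => HW V (l1 V HV)).
exists (A :: l'); split; [|split].
- by move=> V' [<- | /H1 [V _ []]].
- by move=> V' [<- | /H1 [V HV [_ /(_ c Ac) ->]]] //; exact: l2.
- move=> c' Hc'; have Ac' : A c' by apply: Hc'; left.
  split=> //; apply: l3 => V /H2 [W' HW' [_ /(_ c' Ac') <-]].
  by apply: Hc'; right.
Qed.

(* Openness on [A]: every point of the image of [V] has a subbasic
   neighbourhood lifting into [V] along the relation [R]. *)
Lemma gen_open_image (T U : Type) (ST : pset (pset T)) (SU : pset (pset U)) (A : pset T)
    (f : T -> U) (Dom : pset U) (R : U -> T -> Prop) :
  SU Dom -> (forall a, A a -> Dom (f a)) ->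
  (forall u, Dom u -> exists t, A t /\ f t = u /\ R u t) ->
  (forall a V', A a -> ST V' -> V' a ->
     exists W, SU W /\ W (f a) /\ forall u t, Dom u -> W u -> R u t -> V' t) ->
  forall V, (forall a, V a -> A a) -> rel_open (gen_open ST) A V ->
  rel_open (gen_open SU) (img f A) (img f V).
Proof.
move=> HD HfD Hlift Hkey V HVA [U0 [HU0 EV]].
exists (img f V); split; last first.
  by move=> u; split=> [[a [Va ->]] | [] //]; split; [exists a | exists a; split; [exact: HVA|]].
move=> _ [a [Va ->]]; have [Ua Aa] := proj1 (EV a) Va.
have [l [l1 [l2 l3]]] := HU0 a Ua.
have [l' [H1 H2]] := In_list_choice
  (R := fun (V' : pset T) (W : pset U) =>
          SU W /\ W (f a) /\ forall u t, Dom u -> W u -> R u t -> V' t)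
  (fun V' HV' => Hkey a V' Aa (l1 V' HV') (l2 V' HV')).
exists (Dom :: l'); split; [|split].
- by move=> W [<- | /H1 [V' _ []]].
- by move=> W [<- | /H1 [V' _ [_ []]]] //; exact: HfD.
- move=> u Hu; have Du : Dom u by apply: Hu; left.
  have [t [At [ft Rt]]] := Hlift u Du.
  exists t; split=> //; apply/EV; split=> //; apply: l3 => V' /H2 [W HW [_ [_ HWt]]].
  by apply: HWt Rt => //; apply: Hu; right.
Qed.

Section GermGroupoid.
Variables (k : nat) (L : kgraph k).
Local Notation M := (Mor L).
Local Notation V := ('I_k -> nat).
Local Notation Z := (@zerov k).

(** * Unique factorisation *)

Lemma addv_injr (m n n' : V) : addv m n = addv m n' -> n = n'.
Proof. move=> H; vext i; have := f_equal (fun f => f i) H; rewrite /addv; lia. Qed.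

Lemma addv_injl (m m' n : V) : addv m n = addv m' n -> m = m'.
Proof. move=> H; vext i; have := f_equal (fun f => f i) H; rewrite /addv; lia. Qed.

Lemma addv0 (p : V) : addv p Z = p.
Proof. vext i; rewrite /addv /zerov; lia. Qed.

Lemma addv_subv (p q : V) : lev p q -> addv p (subv q p) = q.
Proof. move=> H; vext i; have := H i; rewrite /addv /subv; lia. Qed.

Lemma lev_trans (p q r : V) : lev p q -> lev q r -> lev p r.
Proof. move=> H1 H2 i; have := H1 i; have := H2 i; lia. Qed.

Lemma lev0 (p : V) : lev Z p.
Proof. by move=> i; rewrite /zerov. Qed.

Lemma lev_joinl (p q : V) : lev p (joinv p q).
Proof. move=> i; rewrite /joinv; lia. Qed.

Lemma lev_joinr (p q : V) : lev q (joinv p q).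
Proof. move=> i; rewrite /joinv; lia. Qed.

Lemma le_inf_mono (p q : V) d : lev p q -> le_inf q d -> le_inf p d.
Proof. move=> H1 H2 i; have := H2 i; have := H1 i; case: (d i) => // n; lia. Qed.

Lemma le_inf_join (p q : V) d : le_inf p d -> le_inf q d -> le_inf (joinv p q) d.
Proof. move=> H1 H2 i; have := H2 i; have := H1 i; rewrite /joinv; case: (d i) => // n; lia. Qed.

Lemma dg_rg (l : M) : dg (rg l) = Z.
Proof.
have H := dg_cmp (sr_rg l); rewrite cmp_id_l in H.
vext i; have := f_equal (fun f => f i) H; rewrite /addv /zerov; lia.
Qed.

Lemma dg_sr (l : M) : dg (sr l) = Z.
Proof.
have H := dg_cmp (esym (rg_sr l)); rewrite cmp_id_r in H.
vext i; have := f_equal (fun f => f i) H; rewrite /addv /zerov; lia.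
Qed.

(* Both [(rg l, l)] and [(l, sr l)] factorise [l] into degrees [0 + 0]. *)
Lemma dg0_rg_id (l : M) : dg l = Z -> rg l = l.
Proof.
move=> H0.
have E : dg l = addv Z Z by rewrite H0; vext i.
have [[a b] [_ U]] := unique_fact E.
have E1 := U (rg l, l) (conj (sr_rg l) (conj (dg_rg l) (conj H0 (esym (cmp_id_l l))))).
have E2 := U (l, sr l) (conj (esym (rg_sr l)) (conj H0 (conj (dg_sr l) (esym (cmp_id_r l))))).
by rewrite E1 in E2; case: E2.
Qed.

Lemma cmp_inj_dgl (u v u' v' : M) : sr u = rg v -> sr u' = rg v' -> dg u = dg u' ->
  cmp u v = cmp u' v' -> u = u' /\ v = v'.
Proof.
move=> H1 H2 Hd He.
have Hv : dg v = dg v'.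
  by apply: (@addv_injr (dg u)); rewrite -(dg_cmp H1) He (dg_cmp H2) Hd.
have [[a b] [_ U]] := unique_fact (dg_cmp H1).
have A1 := U (u, v) (conj H1 (conj erefl (conj erefl erefl))).
have A2 := U (u', v') (conj H2 (conj (esym Hd) (conj (esym Hv) He))).
by rewrite A1 in A2; case: A2.
Qed.

Lemma cmp_inj_dgr (u v u' v' : M) : sr u = rg v -> sr u' = rg v' -> dg v = dg v' ->
  cmp u v = cmp u' v' -> u = u' /\ v = v'.
Proof.
move=> H1 H2 Hd He; apply: cmp_inj_dgl => //.
by apply: (@addv_injl _ _ (dg v)); rewrite -(dg_cmp H1) He (dg_cmp H2) Hd.
Qed.

Lemma cmp_cancel_l (u v v' : M) : sr u = rg v -> sr u = rg v' -> cmp u v = cmp u v' -> v = v'.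
Proof. by move=> H1 H2 He; have [] := cmp_inj_dgl H1 H2 erefl He. Qed.

Lemma cmp_cancel_r (l a l' b c : M) : sr l = rg a -> sr l' = rg b -> sr a = rg c -> sr b = rg c ->
  cmp (cmp l a) c = cmp (cmp l' b) c -> cmp l a = cmp l' b.
Proof.
move=> H1 H2 H3 H4 E.
have S1 : sr (cmp l a) = rg c by rewrite sr_cmp.
have S2 : sr (cmp l' b) = rg c by rewrite sr_cmp.
by have [] := cmp_inj_dgr S1 S2 erefl E.
Qed.

Lemma factor_at (w : M) (m : V) : lev m (dg w) ->
  exists u v, sr u = rg v /\ dg u = m /\ dg v = subv (dg w) m /\ w = cmp u v.
Proof.
move=> H.
have E : dg w = addv m (subv (dg w) m) by vext i; have := H i; rewrite /addv /subv; lia.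
have [[a b] [[? [? [? ?]]] _]] := unique_fact E.
by exists a, b.
Qed.

Lemma lev_dg_cmp (u v : M) : sr u = rg v -> lev (dg u) (dg (cmp u v)).
Proof. by move=> H i; rewrite (dg_cmp H) /addv; lia. Qed.

Lemma Lmin_dg (a b : M) (c : M * M) : Lmin a b c ->
  dg c.1 = subv (joinv (dg a) (dg b)) (dg a) /\ dg c.2 = subv (joinv (dg a) (dg b)) (dg b).
Proof.
move=> [H1 [H2 [H3 H4]]].
have E1 := dg_cmp H1; have E2 := dg_cmp H2; rewrite H3 in H4.
split; vext i.
- have := f_equal (fun f => f i) E1; have := f_equal (fun f => f i) H4.
  rewrite -H3 /addv /subv /joinv; lia.
- have := f_equal (fun f => f i) E2; have := f_equal (fun f => f i) H4.
  rewrite /addv /subv /joinv; lia.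
Qed.

(* Cut a common extension [a u = b v] at degree [d a \/ d b]. *)
Lemma Lmin_of_common_ext (a b u v : M) : sr a = rg u -> sr b = rg v -> cmp a u = cmp b v ->
  exists c, Lmin a b c.
Proof.
move=> Hu Hv He.
have Ha : lev (dg a) (dg (cmp a u)) by apply: lev_dg_cmp.
have Hb : lev (dg b) (dg (cmp a u)) by rewrite He; apply: lev_dg_cmp.
set J := joinv (dg a) (dg b).
have HJa : lev (subv J (dg a)) (dg u).
  by move=> i; have := Ha i; have := Hb i; rewrite (dg_cmp Hu) /J /joinv /subv /addv; lia.
have HJb : lev (subv J (dg b)) (dg v).
  by move=> i; have := Ha i; have := Hb i; rewrite He (dg_cmp Hv) /J /joinv /subv /addv; lia.
have [u1 [u2 [Hu12 [Hdu1 [_ Eu]]]]] := factor_at HJa.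
have [v1 [v2 [Hv12 [Hdv1 [_ Ev]]]]] := factor_at HJb.
have Hru1 : rg u1 = rg u by rewrite Eu rg_cmp.
have Hrv1 : rg v1 = rg v by rewrite Ev rg_cmp.
have Da : dg (cmp a u1) = J.
  by rewrite dg_cmp ?Hdu1; [vext i; rewrite /addv /subv /J /joinv; lia | congruence].
have Db : dg (cmp b v1) = J.
  by rewrite dg_cmp ?Hdv1; [vext i; rewrite /addv /subv /J /joinv; lia | congruence].
have E1 : cmp (cmp a u1) u2 = cmp (cmp b v1) v2.
  by rewrite !cmpA -?Eu -?Ev //; congruence.
have Sa : sr (cmp a u1) = rg u2 by rewrite sr_cmp //; congruence.
have Sb : sr (cmp b v1) = rg v2 by rewrite sr_cmp //; congruence.
have [Ee _] := cmp_inj_dgl Sa Sb (etrans Da (esym Db)) E1.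
exists (u1, v1); rewrite /Lmin /=.
by split; [congruence | split; [congruence | split; [exact: Ee | exact: Da]]].
Qed.

Lemma Lmin_cmp_r (m a : M) (c : M * M) : sr m = rg a -> (Lmin m (cmp m a) c <-> c = (a, sr a)).
Proof.
move=> H; split=> [HL|->].
- case: c HL => c1 c2 HL.
  have [_ D2] := Lmin_dg HL; case: HL => [/= H1 [H2 [H3 _]]].
  have J : joinv (dg m) (dg (cmp m a)) = dg (cmp m a).
    by rewrite dg_cmp //; vext i; rewrite /joinv /addv; lia.
  rewrite /= J in D2.
  have Z2 : dg c2 = Z by rewrite D2; vext i; rewrite /subv /zerov; lia.
  have E2 : c2 = sr a by rewrite -(dg0_rg_id Z2) -H2 sr_cmp.
  subst c2; rewrite -(sr_cmp H) cmp_id_r in H3.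
  by rewrite (cmp_cancel_l H1 H H3).
- rewrite /Lmin /= sr_cmp //; do !split => //; first by rewrite rg_sr.
  + by rewrite -(sr_cmp H) cmp_id_r.
  + by rewrite dg_cmp //; vext i; rewrite /joinv /addv; lia.
Qed.

Lemma Lmin_sr (a b : M) c : Lmin a b c -> sr c.1 = sr c.2.
Proof. by move=> [H1 [H2 [H3 _]]]; have := f_equal (@sr k L) H3; rewrite !sr_cmp. Qed.

Lemma Lmin_swap (a b u v : M) : Lmin a b (u, v) -> Lmin b a (v, u).
Proof.
move=> [H1 [H2 [H3 H4]]]; rewrite /Lmin /= -H3 H4; do !split=> //.
by vext i; rewrite /joinv maxnC.
Qed.

Lemma Lmin_eq_fst (a b : M) e e' : Lmin a b e -> Lmin a b e' -> e.1 = e'.1 -> e = e'.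
Proof.
case: e e' => [e1 e2] [e1' e2'] [_ [/= H2 [/= H3 _]]] [_ [/= H2' [/= H3' _]]] /= E; subst e1'.
by rewrite (cmp_cancel_l H2 H2' (etrans (esym H3) H3')).
Qed.

(** * Paths *)

Local Notation kp := (kpath L).

Lemma kpath_ext (x y : kp) : kp_deg x = kp_deg y -> kp_map x = kp_map y -> x = y.
Proof. by case: x; case: y => /= *; subst; f_equal; apply: proof_irrelevance. Qed.

Lemma kp_defined (x : kp) p q : lev p q -> le_inf q (kp_deg x) ->
  exists l, kp_map x p q = Some l.
Proof.
move=> H1 H2; case E: (kp_map x p q) => [l|]; first by exists l.
by case: (proj2 (kp_dom x p q) (conj H1 H2)).
Qed.

Lemma kp_some_dom (x : kp) p q l : kp_map x p q = Some l -> lev p q /\ le_inf q (kp_deg x).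
Proof. by move=> E; apply/(kp_dom x p q); rewrite E. Qed.

Lemma kp_sr_rg (x : kp) p q t l m : kp_map x p q = Some l -> kp_map x q t = Some m -> sr l = rg m.
Proof. by move=> /kp_sr H1 /kp_rg H2; rewrite H1 in H2; case: H2. Qed.

Lemma kp_dg0 (x : kp) n l : kp_map x Z n = Some l -> dg l = n.
Proof. by move=> /kp_dg ->; vext i; rewrite /subv /zerov; lia. Qed.

Lemma kp_split_cmp (x : kp) N u v : kp_map x Z N = Some (cmp u v) -> sr u = rg v ->
  kp_map x Z (dg u) = Some u /\ kp_map x (dg u) N = Some v.
Proof.
move=> H Huv.
have HN := kp_dg0 H; rewrite dg_cmp // in HN.
have [_ Hi] := kp_some_dom H.
have Hl : lev (dg u) N by rewrite -HN => i; rewrite /addv; lia.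
have [a Ha] := kp_defined (lev0 (dg u)) (le_inf_mono Hl Hi).
have [b Hb] := kp_defined Hl Hi.
have Hc := kp_cmp Ha Hb; rewrite H in Hc; case: Hc => Hc.
have [Ea Eb] := cmp_inj_dgl (kp_sr_rg Ha Hb) Huv (kp_dg0 Ha) (esym Hc).
by split; [rewrite Ha Ea | rewrite Hb Eb].
Qed.

Lemma kp_seg_of_cmp (x : kp) n N a v : kp_map x Z n = Some a ->
  kp_map x Z N = Some (cmp a v) -> sr a = rg v -> kp_map x n N = Some v.
Proof. by move=> Ha H Hav; have := proj2 (kp_split_cmp H Hav); rewrite (kp_dg0 Ha). Qed.

Lemma kp_rg_seg (x : kp) m a n : kp_map x Z (dg m) = Some m -> kp_map x (dg m) n = Some a ->
  rg a = sr m.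
Proof. by move=> H1 H2; rewrite (kp_sr_rg H1 H2). Qed.

Lemma kp_Lmin (x : kp) m n a b : kp_map x Z m = Some a -> kp_map x Z n = Some b ->
  exists c, Lmin a b c /\ kp_map x Z (joinv m n) = Some (cmp a c.1).
Proof.
move=> Ha Hb.
have IJ := le_inf_join (proj2 (kp_some_dom Ha)) (proj2 (kp_some_dom Hb)).
have [u Hu] := kp_defined (lev_joinl m n) IJ.
have [v Hv] := kp_defined (lev_joinr m n) IJ.
have E1 := kp_cmp Ha Hu; have E2 := kp_cmp Hb Hv.
exists (u, v); split=> //=.
rewrite E1 in E2; case: E2 => E.
do !split => //; [exact: kp_sr_rg Ha Hu | exact: kp_sr_rg Hb Hv |].
by rewrite (kp_dg0 E1) (kp_dg0 Ha) (kp_dg0 Hb).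
Qed.

Lemma kpath_eq_from (x y : kp) d0 : kp_deg x = kp_deg y -> le_inf d0 (kp_deg x) ->
  (forall n, lev d0 n -> le_inf n (kp_deg x) -> kp_map x Z n = kp_map y Z n) -> x = y.
Proof.
move=> Hd H0 H; apply: kpath_ext => //.
vext p; vext q.
case: (classic (lev p q /\ le_inf q (kp_deg x))) => [[Hpq Hq] | Hn].
- set N := joinv q d0.
  have IN : le_inf N (kp_deg x) by apply: le_inf_join.
  have Iy : forall n, le_inf n (kp_deg x) -> le_inf n (kp_deg y) by rewrite Hd.
  have Hp := le_inf_mono Hpq Hq.
  have [a Ha] := kp_defined (x := x) (lev0 p) Hp.
  have [b Hb] := kp_defined (x := x) Hpq Hq.
  have [c Hc] := kp_defined (x := x) (lev_joinl q d0) IN.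
  have [a' Ha'] := kp_defined (x := y) (lev0 p) (Iy _ Hp).
  have [b' Hb'] := kp_defined (x := y) Hpq (Iy _ Hq).
  have [c' Hc'] := kp_defined (x := y) (lev_joinl q d0) (Iy _ IN).
  have E1 := kp_cmp Ha Hb; have E1' := kp_cmp Ha' Hb'.
  have := H N (lev_joinr q d0) IN; rewrite (kp_cmp E1 Hc) (kp_cmp E1' Hc'); case=> E0.
  have [E3 _] := cmp_inj_dgl (kp_sr_rg E1 Hc) (kp_sr_rg E1' Hc')
                   (etrans (kp_dg0 E1) (esym (kp_dg0 E1'))) E0.
  have [_ E4] := cmp_inj_dgl (kp_sr_rg Ha Hb) (kp_sr_rg Ha' Hb')
                   (etrans (kp_dg0 Ha) (esym (kp_dg0 Ha'))) E3.
  by rewrite Hb Hb' E4.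
- case Ex: (kp_map x p q) => [l|]; first by case: Hn; exact: kp_some_dom Ex.
  case Ey: (kp_map y p q) => [l|] //.
  by case: Hn; rewrite Hd; exact: kp_some_dom Ey.
Qed.

(* Junk [(w, w)] unless [n <= d w]. *)
Definition fac (w : M) (n : V) : M * M :=
  epsilon (inhabits (w, w)) (fun p => sr p.1 = rg p.2 /\ dg p.1 = n /\ w = cmp p.1 p.2).
Definition pre (w : M) (n : V) : M := (fac w n).1.
Definition suf (w : M) (n : V) : M := (fac w n).2.

Lemma fac_spec w n : lev n (dg w) ->
  sr (pre w n) = rg (suf w n) /\ dg (pre w n) = n /\ w = cmp (pre w n) (suf w n).
Proof.
move=> H; rewrite /pre /suf /fac.
apply: (epsilon_spec (inhabits (w, w)) (fun p => sr p.1 = rg p.2 /\ dg p.1 = n /\ w = cmp p.1 p.2)).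
by have [u [v [? [? [? ?]]]]] := factor_at H; exists (u, v).
Qed.

Lemma fac_uniq w n u v : sr u = rg v -> dg u = n -> w = cmp u v -> pre w n = u /\ suf w n = v.
Proof.
move=> H1 H2 H3.
have Hl : lev n (dg w) by rewrite H3 -H2; apply: lev_dg_cmp.
have [A [B C]] := fac_spec Hl.
by apply: cmp_inj_dgl => //; congruence.
Qed.

Lemma suf_dg w n : lev n (dg w) -> dg (suf w n) = subv (dg w) n.
Proof.
move=> H; have [A [B C]] := fac_spec H.
have E := dg_cmp A; rewrite -C in E.
by rewrite E B; vext i; rewrite /subv /addv; lia.
Qed.

Lemma pre_full w : pre w (dg w) = w.
Proof. by have [] := fac_uniq (esym (rg_sr w)) erefl (esym (cmp_id_r w)). Qed.

Lemma suf_full w : suf w (dg w) = sr w.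
Proof. by have [] := fac_uniq (esym (rg_sr w)) erefl (esym (cmp_id_r w)). Qed.

Lemma suf0 w : suf w Z = w.
Proof. by have [] := fac_uniq (sr_rg w) (dg_rg w) (esym (cmp_id_l w)). Qed.

Lemma pre_pre w n n' : lev n n' -> lev n' (dg w) -> pre (pre w n') n = pre w n.
Proof.
move=> H1 H2; have [A [B C]] := fac_spec H2.
have [A' [B' C']] : sr (pre (pre w n') n) = rg (suf (pre w n') n) /\
    dg (pre (pre w n') n) = n /\ pre w n' = cmp (pre (pre w n') n) (suf (pre w n') n).
  by apply: fac_spec; rewrite B.
have Hs1 : sr (suf (pre w n') n) = sr (pre w n') by rewrite {2}C' sr_cmp.
have R : sr (pre (pre w n') n) = rg (cmp (suf (pre w n') n) (suf w n')).
  by rewrite rg_cmp //; congruence.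
have E : w = cmp (pre (pre w n') n) (cmp (suf (pre w n') n) (suf w n')).
  by rewrite -cmpA -?C' //; congruence.
by have [] := fac_uniq R B' E.
Qed.

Lemma pre_cmp w z n : lev n (dg w) -> sr w = rg z -> pre (cmp w z) n = pre w n.
Proof.
move=> H Hz; have [A [B C]] := fac_spec H.
have Hs1 : sr (suf w n) = sr w by rewrite {2}C (sr_cmp A).
have R : sr (pre w n) = rg (cmp (suf w n) z) by rewrite rg_cmp //; congruence.
have E : cmp w z = cmp (pre w n) (cmp (suf w n) z) by rewrite -cmpA -?C //; congruence.
by have [] := fac_uniq R B E.
Qed.

(* A coherent family of prefixes [W n], [n <= D], is the family of initial
   segments of a unique path of degree [D]; its segment [(p, q)] is the
   suffix of [W q] after degree [p]. *)
Section PathOfPrefixes.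
Variables (D : 'I_k -> option nat) (W : V -> M).
Hypothesis dg_W : forall n, le_inf n D -> dg (W n) = n.
Hypothesis pre_W : forall n n', lev n n' -> le_inf n' D -> pre (W n') n = W n.

Definition prefix_map (p q : V) : option M :=
  if excluded_middle_informative (lev p q /\ le_inf q D) then Some (suf (W q) p) else None.

Lemma prefix_map_some p q l : prefix_map p q = Some l ->
  lev p q /\ le_inf q D /\ l = suf (W q) p.
Proof. by rewrite /prefix_map; case: excluded_middle_informative => // [[? ?]] [<-]. Qed.

Lemma prefix_map_val p q : lev p q -> le_inf q D -> prefix_map p q = Some (suf (W q) p).
Proof. by move=> H1 H2; rewrite /prefix_map; case: excluded_middle_informative => // -[]. Qed.

Lemma prefix_map_dom p q : prefix_map p q <> None <-> lev p q /\ le_inf q D.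
Proof. by rewrite /prefix_map; case: excluded_middle_informative. Qed.

Lemma suf_W p q : lev p q -> le_inf q D ->
  [/\ dg (suf (W q) p) = subv q p, rg (suf (W q) p) = sr (W p) & sr (suf (W q) p) = sr (W q)].
Proof.
move=> H1 H2.
have Hd := dg_W H2; have H1' : lev p (dg (W q)) by rewrite Hd.
have [A [B C]] := fac_spec H1'.
split; first by rewrite suf_dg // Hd.
- by rewrite -A pre_W.
- by rewrite {2}C sr_cmp.
Qed.

Lemma suf_W_full p : le_inf p D -> suf (W p) p = sr (W p).
Proof. by move=> H; have := suf_full (W p); rewrite dg_W. Qed.

Lemma prefix_map_dg p q l : prefix_map p q = Some l -> dg l = subv q p.
Proof. by move=> /prefix_map_some [H1 [H2 ->]]; case: (suf_W H1 H2). Qed.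

Lemma prefix_map_rg p q l : prefix_map p q = Some l -> prefix_map p p = Some (rg l).
Proof.
move=> /prefix_map_some [H1 [H2 ->]]; have Hp := le_inf_mono H1 H2.
have [_ -> _] := suf_W H1 H2.
by rewrite prefix_map_val ?suf_W_full //; move=> i.
Qed.

Lemma prefix_map_sr p q l : prefix_map p q = Some l -> prefix_map q q = Some (sr l).
Proof.
move=> /prefix_map_some [H1 [H2 ->]].
have [_ _ ->] := suf_W H1 H2.
by rewrite prefix_map_val ?suf_W_full //; move=> i.
Qed.

Lemma prefix_map_cmp p q t l m : prefix_map p q = Some l -> prefix_map q t = Some m ->
  prefix_map p t = Some (cmp l m).
Proof.
move=> /prefix_map_some [H1 [H2 ->]] /prefix_map_some [H3 [H4 ->]].
have H13 := lev_trans H1 H3; have Hp := le_inf_mono H13 H4.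
rewrite prefix_map_val //; congr Some.
have [A [B C]] : sr (pre (W t) q) = rg (suf (W t) q) /\ dg (pre (W t) q) = q /\
    W t = cmp (pre (W t) q) (suf (W t) q) by apply: fac_spec; rewrite dg_W.
have [A' [B' C']] : sr (pre (W q) p) = rg (suf (W q) p) /\ dg (pre (W q) p) = p /\
    W q = cmp (pre (W q) p) (suf (W q) p) by apply: fac_spec; rewrite dg_W.
rewrite pre_W // in A B C; rewrite pre_W // in A' B' C'.
have Hs : sr (suf (W q) p) = sr (W q) by rewrite {2}C' (sr_cmp A').
have E : W t = cmp (W p) (cmp (suf (W q) p) (suf (W t) q)) by rewrite -cmpA -?C' //; congruence.
have R : sr (W p) = rg (cmp (suf (W q) p) (suf (W t) q)) by rewrite rg_cmp //; congruence.
by have [] := fac_uniq R B' E.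
Qed.

Definition path_of_prefixes : kp :=
  @KPath k L D prefix_map prefix_map_dom prefix_map_dg prefix_map_rg prefix_map_sr prefix_map_cmp.

Lemma path_of_prefixes_val n : le_inf n D -> kp_map path_of_prefixes Z n = Some (W n).
Proof. by move=> H /=; rewrite prefix_map_val ?suf0 //; apply: lev0. Qed.

End PathOfPrefixes.

Definition path_of_mor (m : M) : kp :=
  @path_of_prefixes (fun i => Some (dg m i)) (pre m)
    (fun n H => proj1 (proj2 (fac_spec H))) (fun n n' H1 H2 => pre_pre H1 H2).

Lemma path_of_mor_val m : kp_map (path_of_mor m) Z (dg m) = Some m.
Proof. by rewrite path_of_prefixes_val ?pre_full // => i /=. Qed.

Lemma path_of_mor_prefix (m : M) n a : kp_map (path_of_mor m) Z n = Some a ->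
  exists e, sr a = rg e /\ m = cmp a e.
Proof.
move=> Ha; have [e [He HJ]] := kp_Lmin Ha (path_of_mor_val m).
have J : joinv n (dg m) = dg m.
  by vext i; have := proj2 (kp_some_dom Ha) i; rewrite /joinv /=; lia.
rewrite J path_of_mor_val in HJ; case: HJ => E.
by exists e.1; split; [case: He | ].
Qed.

Section Shift.
Variables (x : kp) (m : V).
Hypothesis le_m_x : le_inf m (kp_deg x).

Definition shift_deg := fun i => omap (fun n => n - m i) (kp_deg x i).
Definition shift_map p q := kp_map x (addv p m) (addv q m).

Lemma shift_map_dom p q : shift_map p q <> None <-> lev p q /\ le_inf q shift_deg.
Proof.
rewrite /shift_map kp_dom /shift_deg /addv; split=> [[H1 H2] | [H1 H2]]; split=> i.
- by have := H1 i; lia.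
- by have := H2 i; case: (kp_deg x i) => //= n; lia.
- by have := H1 i; lia.
- by have := H2 i; have := le_m_x i; case: (kp_deg x i) => //= n; lia.
Qed.

Lemma shift_map_dg p q l : shift_map p q = Some l -> dg l = subv q p.
Proof. by move=> /kp_dg ->; vext i; rewrite /subv /addv; lia. Qed.

Definition shift_path : kp := @KPath k L shift_deg shift_map shift_map_dom shift_map_dg
  (fun p q l => @kp_rg _ _ x _ _ l) (fun p q l => @kp_sr _ _ x _ _ l)
  (fun p q t l l' => @kp_cmp _ _ x _ _ _ l l').

End Shift.

Lemma shift_spec (x : kp) m : le_inf m (kp_deg x) ->
  kp_deg (shift m x) = (fun i => omap (fun n => n - m i) (kp_deg x i)) /\
  forall p q, kp_map (shift m x) p q = kp_map x (addv p m) (addv q m).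
Proof. by move=> H; rewrite /shift; apply epsilon_spec; exists (shift_path H). Qed.

(* The prefix of [l x] of degree [n] is the prefix of [l x(0, (n \/ d l) - d l)]. *)
Section Concat.
Variables (l : M) (x : kp).
Hypothesis x_starts_at_sr : kp_map x Z Z = Some (sr l).

Definition concat_deg := fun i => omap (fun n => dg l i + n) (kp_deg x i).
Definition seg0 t := if kp_map x Z t is Some a then a else l.
Definition concat_prefix n := pre (cmp l (seg0 (subv (joinv n (dg l)) (dg l)))) n.

Lemma seg0_spec t : le_inf t (kp_deg x) ->
  [/\ kp_map x Z t = Some (seg0 t), dg (seg0 t) = t & rg (seg0 t) = sr l].
Proof.
move=> H; have [a Ha] := kp_defined (x := x) (lev0 t) H.
rewrite /seg0 Ha; split=> //; first exact: kp_dg0 Ha.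
by have := kp_rg Ha; rewrite x_starts_at_sr; case.
Qed.

Lemma le_inf_concat_deg n : le_inf n concat_deg -> le_inf (subv (joinv n (dg l)) (dg l)) (kp_deg x).
Proof.
by move=> H i; have := H i; rewrite /concat_deg /subv /joinv; case: (kp_deg x i) => //= ?; lia.
Qed.

Lemma dg_concat_prefix n : le_inf n concat_deg -> dg (concat_prefix n) = n.
Proof.
move=> H; have [A B C] := seg0_spec (le_inf_concat_deg H).
apply: (proj1 (proj2 (fac_spec _))).
by rewrite dg_cmp // B => i; rewrite /addv /subv /joinv; lia.
Qed.

Lemma pre_concat_prefix n n' : lev n n' -> le_inf n' concat_deg ->
  pre (concat_prefix n') n = concat_prefix n.
Proof.
move=> H1 H2; have H2' := le_inf_mono H1 H2.
rewrite /concat_prefix.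
have [A B C] := seg0_spec (le_inf_concat_deg H2).
have [A' B' C'] := seg0_spec (le_inf_concat_deg H2').
move: A B C A' B' C'.
set t := subv (joinv n (dg l)) (dg l); set t' := subv (joinv n' (dg l)) (dg l).
move=> A B C A' B' C'.
have Htt : lev t t' by move=> i; have := H1 i; rewrite /t /t' /subv /joinv; lia.
have [b Hb] := kp_defined (x := x) Htt (le_inf_concat_deg H2).
have E := kp_cmp A' Hb; rewrite A in E; case: E => E.
rewrite pre_pre //; last by rewrite dg_cmp // B => i; rewrite /t' /addv /subv /joinv; lia.
rewrite E -cmpA //; last exact: kp_sr_rg A' Hb.
apply: pre_cmp; first by rewrite dg_cmp // B' => i; rewrite /t /addv /subv /joinv; lia.
by rewrite sr_cmp //; exact: kp_sr_rg A' Hb.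
Qed.

Definition concat_path : kp := path_of_prefixes dg_concat_prefix pre_concat_prefix.

End Concat.

Lemma concat_spec l (x : kp) : kp_map x Z Z = Some (sr l) ->
  kp_deg (Defs.concat l x) = (fun i => omap (fun n => dg l i + n) (kp_deg x i)) /\
  forall n, lev (dg l) n -> le_inf n (kp_deg (Defs.concat l x)) ->
    kp_map (Defs.concat l x) Z n = omap (cmp l) (kp_map x Z (subv n (dg l))).
Proof.
move=> Hl; rewrite /Defs.concat; apply epsilon_spec; exists (concat_path Hl); split=> // n H1 H2.
rewrite path_of_prefixes_val //.
have J : joinv n (dg l) = n by vext i; have := H1 i; rewrite /joinv; lia.
have [A B C] := seg0_spec Hl (le_inf_concat_deg H2).
rewrite /concat_prefix; rewrite J in A B C *; rewrite A /=; congr Some.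
have D : dg (cmp l (seg0 l x (subv n (dg l)))) = n.
  by rewrite dg_cmp // B; vext i; have := H1 i; rewrite /addv /subv; lia.
by have := pre_full (cmp l (seg0 l x (subv n (dg l)))); rewrite D.
Qed.

(** * The inverse semigroup S_Lambda and the maps theta_F *)

Lemma SL_Lmin1_eq (F : pset (M * M)) p q c : in_SL F -> F p -> F q -> Lmin p.1 q.1 c -> p = q.
Proof.
move=> [_ [_ H]] Fp Fq Hc; case: (classic (p = q)) => // ne.
by case: (proj1 (H p q Fp Fq ne) c Hc).
Qed.

Lemma SL_Lmin2_eq (F : pset (M * M)) p q c : in_SL F -> F p -> F q -> Lmin p.2 q.2 c -> p = q.
Proof.
move=> [_ [_ H]] Fp Fq Hc; case: (classic (p = q)) => // ne.
by case: (proj2 (H p q Fp Fq ne) c Hc).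
Qed.

Lemma SL_sr (F : pset (M * M)) p : in_SL F -> F p -> sr p.1 = sr p.2.
Proof. by move=> [_ [H _]] /H. Qed.

Lemma SL_ext2_eq (F : pset (M * M)) p q e : in_SL F -> F p -> F q ->
  sr p.2 = rg e -> q.2 = cmp p.2 e -> p = q.
Proof.
move=> HF Fp Fq He Eq.
have E' : cmp p.2 e = cmp q.2 (sr q.2) by rewrite cmp_id_r.
have [c Hc] := Lmin_of_common_ext He (esym (rg_sr _)) E'.
exact: SL_Lmin2_eq HF Fp Fq Hc.
Qed.

Lemma SL_ext1_eq (F : pset (M * M)) p q e : in_SL F -> F p -> F q ->
  sr p.1 = rg e -> q.1 = cmp p.1 e -> p = q.
Proof.
move=> HF Fp Fq He Eq.
have E' : cmp p.1 e = cmp q.1 (sr q.1) by rewrite cmp_id_r.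
have [c Hc] := Lmin_of_common_ext He (esym (rg_sr _)) E'.
exact: SL_Lmin1_eq HF Fp Fq Hc.
Qed.

Lemma SL_selected_uniq (F : pset (M * M)) (x : kp) p q : in_SL F -> F p -> F q ->
  kp_map x Z (dg p.2) = Some p.2 -> kp_map x Z (dg q.2) = Some q.2 -> p = q.
Proof.
by move=> HF Fp Fq Hp Hq; have [c [Hc _]] := kp_Lmin Hp Hq; exact: SL_Lmin2_eq HF Fp Fq Hc.
Qed.

Lemma sstar_SL (F : pset (M * M)) : in_SL F -> in_SL (sstar F).
Proof.
move=> [[s Hs] [H2 H3]]; split; [|split].
- exists (map (fun p => (p.2, p.1)) s) => -[a b] Hp.
  by apply/in_map_iff; exists (b, a); split=> //; exact: Hs Hp.
- by move=> [a b] /H2.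
- move=> [a b] [c d] Hp Hq ne.
  have ne' : (b, a) <> (d, c) by case=> *; subst.
  by have [] := H3 _ _ Hp Hq ne'.
Qed.

Lemma sstar_in (F : pset (M * M)) p : F p -> sstar F (p.2, p.1).
Proof. by case: p. Qed.

Lemma sstar_sstar (F : pset (M * M)) : sstar (sstar F) = F.
Proof. by apply: pset_ext => -[]. Qed.

(* [replaces l m x y] says [y = l sigma^(d m) x], through the degree of [y]
   and its initial segments of degree [d l + t]. *)
Definition replaces (l m : M) (x y : kp) : Prop :=
  kp_deg y = (fun i => omap (fun n => dg l i + (n - dg m i)) (kp_deg x i)) /\
  forall t, le_inf (addv (dg m) t) (kp_deg x) ->
    kp_map y Z (addv (dg l) t) = omap (cmp l) (kp_map x (dg m) (addv (dg m) t)).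

Lemma replaces_concat l m (x : kp) : kp_map x Z (dg m) = Some m -> sr l = sr m ->
  replaces l m x (Defs.concat l (shift (dg m) x)).
Proof.
move=> Hm Hlm; have Im := proj2 (kp_some_dom Hm).
have [D1 D2] := shift_spec Im.
have Z0 : addv Z (dg m) = dg m by vext i; rewrite /addv /zerov.
have H0 : kp_map (shift (dg m) x) Z Z = Some (sr l) by rewrite D2 Z0 Hlm (kp_sr Hm).
have [C1 C2] := concat_spec H0.
split; first by rewrite C1 D1; vext i; case: (kp_deg x i).
move=> t Ht; rewrite C2.
- rewrite D2 Z0.
  have -> // : addv (subv (addv (dg l) t) (dg l)) (dg m) = addv (dg m) t.
  by vext i; rewrite /addv /subv; lia.
- by move=> i; rewrite /addv; lia.
- rewrite C1 D1 => i; have := Ht i; have := Im i; rewrite /addv.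
  by case: (kp_deg x i) => //= ?; lia.
Qed.

Lemma theta_replaces (F : pset (M * M)) (x : kp) p : in_SL F -> F p ->
  kp_map x Z (dg p.2) = Some p.2 -> replaces p.1 p.2 x (theta F x).
Proof.
move=> HF Fp Hx.
have [q [Fq [Hq ->]]] : exists q, F q /\ kp_map x Z (dg q.2) = Some q.2 /\
    theta F x = Defs.concat q.1 (shift (dg q.2) x).
  by rewrite /theta; apply epsilon_spec; exists (Defs.concat p.1 (shift (dg p.2) x)), p.
rewrite -(SL_selected_uniq HF Fp Fq Hx Hq).
exact: replaces_concat Hx (SL_sr HF Fp).
Qed.

Lemma replaces_uniq l m (x y1 y2 : kp) : kp_map x Z (dg m) = Some m ->
  replaces l m x y1 -> replaces l m x y2 -> y1 = y2.
Proof.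
move=> Hm [D1 V1] [D2 V2]; have Im := proj2 (kp_some_dom Hm).
apply: (kpath_eq_from (d0 := dg l)); first by congruence.
  by rewrite D1 => i; have := Im i; case: (kp_deg x i) => //= ?; lia.
move=> n Hn In.
have E : n = addv (dg l) (subv n (dg l)) by rewrite addv_subv.
have It : le_inf (addv (dg m) (subv n (dg l))) (kp_deg x).
  move=> i; have := In i; rewrite D1 /addv /subv; have := Im i; have := Hn i.
  by case: (kp_deg x i) => //= ?; lia.
by rewrite E V1 // V2.
Qed.

Lemma replaces_le_inf l m (x y : kp) t : replaces l m x y -> le_inf (dg m) (kp_deg x) ->
  le_inf (addv (dg m) t) (kp_deg x) <-> le_inf (addv (dg l) t) (kp_deg y).
Proof.
move=> [D _] Im; rewrite D /addv; split=> H i; have := H i; have := Im i;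
  by case: (kp_deg x i) => //= ?; lia.
Qed.

Lemma replaces_val l m (x y : kp) N a : replaces l m x y -> kp_map x (dg m) N = Some a ->
  kp_map y Z (addv (dg l) (subv N (dg m))) = Some (cmp l a).
Proof.
move=> [_ V] Ha; have [LN IN] := kp_some_dom Ha.
by rewrite V addv_subv // Ha.
Qed.

Lemma replaces_head l m (x y : kp) : kp_map x Z (dg m) = Some m -> sr l = sr m ->
  replaces l m x y -> kp_map y Z (dg l) = Some l.
Proof.
move=> Hm Hlm HT; have := replaces_val HT (kp_sr Hm).
have -> : subv (dg m) (dg m) = Z by vext i; rewrite /subv /zerov; lia.
by rewrite addv0 -Hlm cmp_id_r.
Qed.

Lemma replaces_seg l m (x y : kp) s t : kp_map x Z (dg m) = Some m -> sr l = sr m ->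
  replaces l m x y -> lev s t -> le_inf (addv (dg m) t) (kp_deg x) ->
  kp_map y (addv (dg l) s) (addv (dg l) t) = kp_map x (addv (dg m) s) (addv (dg m) t).
Proof.
move=> Hm Hlm [D V] Hst It.
have L2 : lev (addv (dg m) s) (addv (dg m) t) by move=> i; have := Hst i; rewrite /addv; lia.
have L1 : lev (dg m) (addv (dg m) s) by move=> i; rewrite /addv; lia.
have [a Ha] := kp_defined L1 (le_inf_mono L2 It).
have [b Hb] := kp_defined L2 It.
have Y1 : kp_map y Z (addv (dg l) s) = Some (cmp l a) by rewrite V ?Ha //; exact: le_inf_mono L2 It.
have Y2 : kp_map y Z (addv (dg l) t) = Some (cmp (cmp l a) b).
  by rewrite V // (kp_cmp Ha Hb) /= cmpA // ?Hlm -?(kp_rg_seg Hm Ha) //; exact: kp_sr_rg Ha Hb.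
rewrite Hb; apply: (kp_seg_of_cmp Y1 Y2).
by rewrite sr_cmp ?Hlm -?(kp_rg_seg Hm Ha) //; exact: kp_sr_rg Ha Hb.
Qed.

Lemma replaces_sym l m (x y : kp) : kp_map x Z (dg m) = Some m -> sr l = sr m ->
  replaces l m x y -> replaces m l y x.
Proof.
move=> Hm Hlm HT; have Im := proj2 (kp_some_dom Hm).
split.
  by case: HT => D _; rewrite D; vext i; have := Im i; case: (kp_deg x i) => //= ? ?; f_equal; lia.
move=> t Ht.
have Ht' : le_inf (addv (dg m) t) (kp_deg x) by apply/(replaces_le_inf t HT Im).
have S := replaces_seg Hm Hlm HT (lev0 t) Ht'; rewrite !addv0 in S; rewrite S.
have [a Ha] := kp_defined (x := x) (fun i => leq_addr (t i) (dg m i)) Ht'.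
by rewrite Ha /=; exact: kp_cmp Hm Ha.
Qed.

Lemma theta_sstar_theta (F : pset (M * M)) (x : kp) p : in_SL F -> F p ->
  kp_map x Z (dg p.2) = Some p.2 ->
  kp_map (theta F x) Z (dg p.1) = Some p.1 /\ theta (sstar F) (theta F x) = x.
Proof.
move=> HF Fp Hx.
have HT := theta_replaces HF Fp Hx; have Hs := SL_sr HF Fp.
have Hh := replaces_head Hx Hs HT; split=> //.
have HT2 := theta_replaces (sstar_SL HF) (sstar_in Fp) Hh.
exact: replaces_uniq Hh HT2 (replaces_sym Hx Hs HT).
Qed.

(** * Germs *)

Definition agree (F G : pset (M * M)) (x : kp) : Prop :=
  exists p q N a b, F p /\ G q /\
    kp_map x Z (dg p.2) = Some p.2 /\ kp_map x Z (dg q.2) = Some q.2 /\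
    kp_map x (dg p.2) N = Some a /\ kp_map x (dg q.2) N = Some b /\ cmp p.1 a = cmp q.1 b.

(* Pass through a common extension [N1 \/ N2] and cancel on the right. *)
Lemma agree_level_change (x : kp) (l m l' m' : M) N1 N2 a1 b1 a2 b2 :
  sr l = sr m -> sr l' = sr m' ->
  kp_map x Z (dg m) = Some m -> kp_map x Z (dg m') = Some m' ->
  kp_map x (dg m) N1 = Some a1 -> kp_map x (dg m') N1 = Some b1 ->
  kp_map x (dg m) N2 = Some a2 -> kp_map x (dg m') N2 = Some b2 ->
  cmp l a1 = cmp l' b1 -> cmp l a2 = cmp l' b2.
Proof.
move=> Hl Hl' Hm Hm' A1 B1 A2 B2 E.
have La1 : sr l = rg a1 by rewrite Hl (kp_rg_seg Hm A1).
have Lb1 : sr l' = rg b1 by rewrite Hl' (kp_rg_seg Hm' B1).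
have La2 : sr l = rg a2 by rewrite Hl (kp_rg_seg Hm A2).
have Lb2 : sr l' = rg b2 by rewrite Hl' (kp_rg_seg Hm' B2).
have I := le_inf_join (proj2 (kp_some_dom A1)) (proj2 (kp_some_dom A2)).
have [c1 C1] := kp_defined (lev_joinl N1 N2) I.
have [c2 C2] := kp_defined (lev_joinr N1 N2) I.
have := kp_cmp A2 C2; rewrite (kp_cmp A1 C1); case=> EX.
have := kp_cmp B2 C2; rewrite (kp_cmp B1 C1); case=> EY.
have SA1 := kp_sr_rg A1 C1; have SB1 := kp_sr_rg B1 C1.
have SA2 := kp_sr_rg A2 C2; have SB2 := kp_sr_rg B2 C2.
apply: (cmp_cancel_r La2 Lb2 SA2 SB2).
by rewrite (cmpA La2 SA2) (cmpA Lb2 SB2) -EX -EY -(cmpA La1 SA1) -(cmpA Lb1 SB1) E.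
Qed.

Lemma agree_any (F G : pset (M * M)) (x : kp) : in_SL F -> in_SL G -> agree F G x ->
  forall p q N a b, F p -> G q -> kp_map x Z (dg p.2) = Some p.2 ->
    kp_map x Z (dg q.2) = Some q.2 ->
    kp_map x (dg p.2) N = Some a -> kp_map x (dg q.2) N = Some b -> cmp p.1 a = cmp q.1 b.
Proof.
move=> HF HG [p0 [q0 [N0 [a0 [b0 [Fp0 [Gq0 [Hp0 [Hq0 [A0 [B0 E0]]]]]]]]]]].
move=> p q N a b Fp Gq Hp Hq A B.
rewrite -(SL_selected_uniq HF Fp0 Fp Hp0 Hp) -(SL_selected_uniq HG Gq0 Gq Hq0 Hq) in A B *.
exact: agree_level_change (SL_sr HF Fp0) (SL_sr HG Gq0) Hp0 Hq0 A0 B0 A B E0.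
Qed.

Lemma agree_refl (F : pset (M * M)) (x : kp) : valid F x -> agree F F x.
Proof.
move=> [HF [p [Fp Hp]]]; exists p, p, (dg p.2), (sr p.2), (sr p.2).
by do !split=> //; exact: kp_sr Hp.
Qed.

Lemma agree_sym F G (x : kp) : agree F G x -> agree G F x.
Proof. by move=> [p [q [N [a [b [? [? [? [? [? [? E]]]]]]]]]]]; exists q, p, N, b, a. Qed.

Lemma agree_trans F G H (x : kp) : in_SL F -> in_SL G -> in_SL H ->
  agree F G x -> agree G H x -> agree F H x.
Proof.
move=> HF HG HH A1 A2.
have [p [q [N1 [a1 [b1 [Fp [Gq [Hp [Hq [X1 [Y1 _]]]]]]]]]]] := A1.
have [q' [r [N2 [b2 [c2 [Gq' [Hr [Hq' [Hr' [X2 [Y2 _]]]]]]]]]]] := A2.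
set N := joinv N1 N2.
have I := le_inf_join (proj2 (kp_some_dom X1)) (proj2 (kp_some_dom X2)).
have Lp := lev_trans (proj1 (kp_some_dom X1)) (lev_joinl N1 N2).
have Lq := lev_trans (proj1 (kp_some_dom Y1)) (lev_joinl N1 N2).
have Lr := lev_trans (proj1 (kp_some_dom Y2)) (lev_joinr N1 N2).
have [a Ha] := kp_defined Lp I; have [b Hb] := kp_defined Lq I; have [c Hc] := kp_defined Lr I.
exists p, r, N, a, c; do !split=> //.
by rewrite (agree_any HF HG A1 Fp Gq Hp Hq Ha Hb) (agree_any HG HH A2 Gq Hr Hq Hr' Hb Hc).
Qed.

Definition diag1 (v : M) : pset (M * M) := fun r => r = (v, v).

Lemma diag1_SL v : in_SL (diag1 v).
Proof. by split; [exists [:: (v, v)] => p -> /=; left | split=> [p -> | p q -> ->]]. Qed.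

Lemma DF_diag1 v (u : kp) : DF (diag1 v) u <-> kp_map u Z (dg v) = Some v.
Proof. by split=> [[r [-> H]] | H] //; exists (v, v). Qed.

(* By alignment, the only pair of [F] that meets [m a] is the one with second entry [m]. *)
Lemma smul_diag1 (F : pset (M * M)) p a v : in_SL F -> F p -> sr p.2 = rg a -> v = cmp p.2 a ->
  smul F (diag1 v) = fun c => c = (cmp p.1 a, v).
Proof.
move=> HF Fp Ha Hv; apply: pset_ext => c; split.
- move=> [p' [q' [e [Fp' [-> [He ->]]]]]] /=.
  have [E1 [E2 [E3 _]]] := He; rewrite /= in E1 E2 E3.
  have Rae : sr a = rg e.2 by rewrite -E2 Hv sr_cmp.
  rewrite Hv cmpA // in E3.
  have [c0 Hc0] := Lmin_of_common_ext E1 (etrans Ha (esym (rg_cmp Rae))) E3.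
  rewrite (SL_Lmin2_eq HF Fp' Fp Hc0) in He *.
  rewrite /= Hv in He; have -> /= := proj1 (Lmin_cmp_r _ Ha) He.
  by rewrite Hv -(sr_cmp Ha) cmp_id_r.
- move=> ->; exists p, (v, v), (a, sr a); split=> //; split=> //.
  split; first by rewrite /= Hv; apply/(Lmin_cmp_r _ Ha).
  by rewrite /= Hv -(sr_cmp Ha) cmp_id_r.
Qed.

Lemma diag1_idem v : idempotent_SL (diag1 v).
Proof.
split; first exact: diag1_SL.
rewrite (@smul_diag1 (diag1 v) (v, v) (sr v) v (diag1_SL v) erefl) /=.
- by rewrite cmp_id_r.
- by rewrite rg_sr.
- by rewrite cmp_id_r.
Qed.

(* Write [r] as a product in [P P]: alignment forces both factors to be [r],
   and unique factorisation then gives [r.1 = r.2]. *)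
Lemma idempotent_diag (P : pset (M * M)) r : idempotent_SL P -> P r -> r.1 = r.2.
Proof.
move=> [HP EP] Pr.
have : smul P P r by rewrite EP.
move=> [p [q [e [Pp [Pq [[E1 [E2 [E3 _]]] Hr]]]]]].
have Sp := SL_sr HP Pp; have Sr := SL_sr HP Pr.
have R1 : sr q.2 = rg e.2 by rewrite -(SL_sr HP Pq).
have Eqr := SL_ext2_eq HP Pq Pr R1 (f_equal snd Hr).
subst q; have Hr2 : r.2 = cmp r.2 e.2 by rewrite {1}Hr.
have D0 : dg e.2 = Z.
  have := dg_cmp R1; rewrite -Hr2 => D.
  by vext i; have := f_equal (fun f => f i) D; rewrite /addv /zerov; lia.
rewrite -(dg0_rg_id D0) -E2 cmp_id_r in E3.
have Hr1 : r.1 = cmp p.1 e.1 by rewrite {1}Hr.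
have R2 : sr p.1 = rg e.1 by rewrite Sp.
have Dp : dg p.1 = dg p.2.
  by apply: (@addv_injl _ _ (dg e.1)); rewrite -(dg_cmp R2) -(dg_cmp E1) E3 -Hr1.
have [Ep _] := cmp_inj_dgl R2 E1 Dp (etrans (esym Hr1) (esym E3)).
by rewrite -(SL_ext1_eq HP Pp Pr R2 Hr1).
Qed.

(* Both [F P] and [G P] contain a pair built from the initial segment of [x] of
   degree [d m \/ d r], where [(l, m)] in [F] and [(r, r)] in [P] are selected by [x]. *)
Lemma agree_of_idempotent (F G P : pset (M * M)) (x : kp) : valid F x ->
  idempotent_SL P -> DF P x -> smul F P = smul G P -> agree F G x.
Proof.
move=> [HF [p [Fp Hp]]] HP [r [Pr Hr]] EFP.
have Dr := idempotent_diag HP Pr.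
have [e [He HJ]] := kp_Lmin Hp Hr.
have : smul F P (cmp p.1 e.1, cmp r.2 e.2) by exists p, r, e; rewrite Dr.
rewrite EFP => -[q' [r' [e' [Gq' [Pr' [He' [Eq1 Eq2]]]]]]].
have Dr' := idempotent_diag HP Pr'.
have [F1 [F2 [F3 _]]] := He; have [G1 [G2 [G3 _]]] := He'.
have X1 : kp_map x Z (joinv (dg p.2) (dg r.2)) = Some (cmp q'.2 e'.1).
  by rewrite HJ F3 Eq2 -Dr' -G3.
have [Y1 Y2] := kp_split_cmp X1 G1.
have [_ Z2] := kp_split_cmp HJ F1.
by exists p, q', (joinv (dg p.2) (dg r.2)), e.1, e'.1.
Qed.

Lemma idempotent_of_agree (F G : pset (M * M)) (x : kp) : in_SL F -> in_SL G -> agree F G x ->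
  exists P, idempotent_SL P /\ DF P x /\ smul F P = smul G P.
Proof.
move=> HF HG [p [q [N [a [b [Fp [Gq [Hp [Hq [A [B E]]]]]]]]]]].
have Xa := kp_cmp Hp A; have Xb := kp_cmp Hq B.
exists (diag1 (cmp p.2 a)); split; first exact: diag1_idem.
split; first by apply/DF_diag1; rewrite (kp_dg0 Xa).
have Ev : cmp p.2 a = cmp q.2 b by rewrite Xa in Xb; case: Xb.
by rewrite (smul_diag1 HF Fp (kp_sr_rg Hp A) erefl) (smul_diag1 HG Gq (kp_sr_rg Hq B) Ev) E.
Qed.

Lemma germ_equiv_agree (F G : pset (M * M)) (x y : kp) : valid F x -> valid G y ->
  (germ_equiv (F, x) (G, y) <-> x = y /\ agree F G x).
Proof.
move=> VF VG; split=> [[/= Exy [P [HP [DP EFP]]]] | [<- A]].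
  by subst y; split=> //; exact: agree_of_idempotent VF HP DP EFP.
by split=> //; exact: idempotent_of_agree (proj1 VF) (proj1 VG) A.
Qed.

Local Notation germ := (germ L).

Lemma germ_class_eq F G (x y : kp) : valid F x -> valid G y ->
  (germ_class F x = germ_class G y <-> x = y /\ agree F G x).
Proof.
move=> VF VG; split=> [E | [Exy A]].
  have : germ_class G y (G, y).
    by split=> //; apply/(germ_equiv_agree VG VG); split=> //; exact: agree_refl.
  by rewrite -E => -[_ /(germ_equiv_agree VF VG)].
subst y; apply: pset_ext => -[H z]; rewrite /germ_class /=.
split=> -[Vz Eq]; split=> //.
- move/(germ_equiv_agree VF Vz): Eq => -[Exz A2]; subst z.
  apply/(germ_equiv_agree VG Vz); split=> //.
  exact: agree_trans (proj1 VG) (proj1 VF) (proj1 Vz) (agree_sym A) A2.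
- move/(germ_equiv_agree VG Vz): Eq => -[Exz A2]; subst z.
  apply/(germ_equiv_agree VF Vz); split=> //.
  exact: agree_trans (proj1 VF) (proj1 VG) (proj1 Vz) A A2.
Qed.

Definition mkgerm F (x : kp) (H : valid F x) : germ :=
  exist _ (germ_class F x) (ex_intro _ F (ex_intro _ x (conj H erefl))).

Lemma is_germ_mkgerm F (x : kp) (H : valid F x) : is_germ_of (mkgerm H) F x.
Proof. by []. Qed.

Lemma Psi_mkgerm F (x : kp) (H : valid F x) : Psi F (mkgerm H).
Proof. by exists x; split; [case: H|]. Qed.

Lemma Psi_of_germ F (c : germ) (x : kp) : is_germ_of c F x -> Psi F c.
Proof. by move=> H; exists x; split=> //; case: H => -[]. Qed.

Lemma is_germ_eq (g : germ) F G (x y : kp) : is_germ_of g F x -> is_germ_of g G y ->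
  y = x /\ agree F G x.
Proof. by move=> [V1 E1] [V2 E2]; rewrite E1 in E2; have [] := proj1 (germ_class_eq V1 V2) E2. Qed.

Lemma is_germ_transfer (g : germ) F G (x : kp) : is_germ_of g F x -> valid G x -> agree F G x ->
  is_germ_of g G x.
Proof. by move=> [V1 E1] V2 A; split=> //; rewrite E1; apply/germ_class_eq. Qed.

Lemma germ_uniq (g1 g2 : germ) F (x : kp) : is_germ_of g1 F x -> is_germ_of g2 F x -> g1 = g2.
Proof.
case: g1 g2 => [c1 H1] [c2 H2] [_ /= E1] [_ /= E2]; subst c1 c2.
by f_equal; apply: proof_irrelevance.
Qed.

Lemma Psi_DF K F (t : germ) (u : kp) : Psi K t -> is_germ_of t F u -> DF K u.
Proof. by move=> [u' [Du Ht]] Hu; have [<- _] := is_germ_eq Hu Ht. Qed.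

Lemma germ_s_val (g : germ) F (x : kp) : is_germ_of g F x -> germ_s g = x.
Proof.
move=> H; rewrite /germ_s.
have [F' H'] : exists F',
    is_germ_of g F' (epsilon (germ_inh g) (fun x => exists F, is_germ_of g F x)).
  by apply: (epsilon_spec (germ_inh g) (fun x => exists F, is_germ_of g F x)); exists x, F.
by have [] := is_germ_eq H H'.
Qed.

(* Two replacements that agree on one segment [x(d m, N)] agree on all later
   ones, hence everywhere by [kpath_eq_from]. *)
Lemma replaces_agree l m l' m' (x y y' : kp) N a b : sr l = sr m -> sr l' = sr m' ->
  kp_map x Z (dg m) = Some m -> kp_map x Z (dg m') = Some m' ->
  replaces l m x y -> replaces l' m' x y' ->
  kp_map x (dg m) N = Some a -> kp_map x (dg m') N = Some b -> cmp l a = cmp l' b -> y = y'.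
Proof.
move=> Sl Sl' Hm Hm' T1 T2 A B E.
have Ra := kp_rg_seg Hm A; have Rb := kp_rg_seg Hm' B.
have [LN IN] := kp_some_dom A; have [LN' _] := kp_some_dom B.
set d0 := addv (dg l) (subv N (dg m)).
have Ed : forall i, dg l i + (N i - dg m i) = dg l' i + (N i - dg m' i).
  move=> i; have := f_equal (fun f => f i) (f_equal (@dg k L) E).
  by rewrite !dg_cmp ?(kp_dg A) ?(kp_dg B) /addv /subv; try congruence; lia.
have V1 := replaces_val T1 A.
apply: (kpath_eq_from (d0 := d0)).
- rewrite (proj1 T1) (proj1 T2); vext i; have := IN i; have := LN i; have := LN' i; have := Ed i.
  by case: (kp_deg x i) => //= ? *; f_equal; lia.
- exact: proj2 (kp_some_dom V1).
move=> n Hn In.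
set N' := addv N (subv n d0).
have IN' : le_inf N' (kp_deg x).
  move=> i; have := In i; rewrite (proj1 T1); have := LN i; have := Hn i; have := IN i.
  by rewrite /N' /d0 /addv /subv; case: (kp_deg x i) => //= *; lia.
have [c C] := kp_defined (fun i => leq_addr (subv n d0 i) (N i)) IN'.
have Y1 := replaces_val T1 (kp_cmp A C); have Y2 := replaces_val T2 (kp_cmp B C).
have -> : n = addv (dg l) (subv N' (dg m)).
  by vext i; have := Hn i; have := LN i; rewrite /N' /d0 /addv /subv; lia.
rewrite Y1.
have -> : addv (dg l) (subv N' (dg m)) = addv (dg l') (subv N' (dg m')).
  vext i; have := Hn i; have := LN i; have := LN' i; have := Ed i.
  by rewrite /N' /d0 /addv /subv; lia.
have SA := kp_sr_rg A C; have SB := kp_sr_rg B C.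
by rewrite Y2 -!cmpA ?E //; congruence.
Qed.

Lemma theta_agree F G (x : kp) : valid F x -> valid G x -> agree F G x -> theta F x = theta G x.
Proof.
move=> [HF _] [HG _] [p [q [N [a [b [Fp [Gq [Hp [Hq [A [B E]]]]]]]]]]].
exact: replaces_agree (SL_sr HF Fp) (SL_sr HG Gq) Hp Hq
  (theta_replaces HF Fp Hp) (theta_replaces HG Gq Hq) A B E.
Qed.

Lemma germ_r_val (g : germ) F (x : kp) : is_germ_of g F x -> germ_r g = theta F x.
Proof.
move=> H; rewrite /germ_r.
have [F' [x' [H' ->]]] : exists F' x', is_germ_of g F' x' /\
    epsilon (germ_inh g) (fun y => exists F x, is_germ_of g F x /\ y = theta F x) = theta F' x'.
  by apply: (epsilon_spec (germ_inh g) (fun y => exists F x, is_germ_of g F x /\ y = theta F x));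
     exists (theta F x), F, x.
have [Ex A] := is_germ_eq H H'; subst x'.
exact: esym (theta_agree (proj1 H) (proj1 H') A).
Qed.

(** * Products and inverses of germs *)

Lemma sstar_smul (F G : pset (M * M)) : sstar (smul F G) = smul (sstar G) (sstar F).
Proof.
apply: pset_ext => -[c1 c2]; split=> [[p [q [[e1 e2] [Fp [Gq [He /= [-> ->]]]]]]] |
                                      [q [p [[e2 e1] [Gq [Fp [He /= [-> ->]]]]]]]].
- exists (q.2, q.1), (p.2, p.1), (e2, e1).
  by split; [exact: sstar_in | split; [exact: sstar_in | split; [exact: Lmin_swap |]]].
- exists (p.2, p.1), (q.2, q.1), (e1, e2).
  by split; [exact: Fp | split; [exact: Gq | split; [exact: Lmin_swap |]]].
Qed.

Lemma smul_finite (F G : pset (M * M)) : finitely_aligned L -> in_SL F -> in_SL G ->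
  exists s : list (M * M), forall c, smul F G c -> In c s.
Proof.
move=> HL [[sF HsF] _] [[sG HsG] _].
pose lm l m := proj1_sig (constructive_indefinite_description _ (HL l m)).
have Hlm l m : forall a, Lmin l m a <-> In a (lm l m).
  exact: proj2_sig (constructive_indefinite_description _ (HL l m)).
exists (flat_map (fun p => flat_map (fun q =>
  map (fun e => (cmp p.1 e.1, cmp q.2 e.2)) (lm p.2 q.1)) sG) sF).
move=> c [p [q [e [Fp [Gq [He ->]]]]]].
apply/in_flat_map; exists p; split; first exact: HsF.
apply/in_flat_map; exists q; split; first exact: HsG.
by apply/in_map_iff; exists e; split=> //; apply/Hlm.
Qed.

Lemma smul_sr (F G : pset (M * M)) c : in_SL F -> in_SL G -> smul F G c -> sr c.1 = sr c.2.
Proof.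
move=> HF HG [p [q [e [Fp [Gq [He ->]]]]]] /=.
have [E1 [E2 _]] := He.
rewrite !sr_cmp ?(Lmin_sr He) //; first by rewrite -(SL_sr HG Gq).
by rewrite (SL_sr HF Fp).
Qed.

(* If [l e z = l' e' z'] then [(l, m) = (l', m')] by alignment in [F]; cancelling
   [l] and rewriting [m e = r f] gives a common extension of [r] and [r'], so the
   pairs of [G] agree as well, and then so do the minimal extensions. *)
Lemma smul_fst_disjoint (F G : pset (M * M)) c c' z : in_SL F -> in_SL G ->
  smul F G c -> smul F G c' -> Lmin c.1 c'.1 z -> c = c'.
Proof.
move=> HF HG [p [q [e [Fp [Gq [He ->]]]]]] [p' [q' [e' [Fp' [Gq' [He' ->]]]]]] [Z1 [Z2 [Z3 _]]] /=.
rewrite /= in Z1 Z2 Z3.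
have [E1 [E2 [E3 _]]] := He; have [E1' [E2' [E3' _]]] := He'.
have Se := Lmin_sr He; have Se' := Lmin_sr He'.
have Sp := SL_sr HF Fp; have Sp' := SL_sr HF Fp'.
rewrite sr_cmp in Z1; last by congruence.
rewrite sr_cmp in Z2; last by congruence.
rewrite !cmpA in Z3; try congruence.
have R1 : sr p.1 = rg (cmp e.1 z.1) by rewrite rg_cmp; congruence.
have R1' : sr p'.1 = rg (cmp e'.1 z.2) by rewrite rg_cmp; congruence.
have [w Hw] := Lmin_of_common_ext R1 R1' Z3.
have Ep := SL_Lmin1_eq HF Fp Fp' Hw; subst p'.
have X := cmp_cancel_l R1 R1' Z3.
have Rq : sr q.1 = rg (cmp e.2 z.1) by rewrite rg_cmp; congruence.
have Rq' : sr q'.1 = rg (cmp e'.2 z.2) by rewrite rg_cmp; congruence.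
have Y : cmp q.1 (cmp e.2 z.1) = cmp q'.1 (cmp e'.2 z.2).
  by rewrite -!cmpA -?E3 -?E3' ?cmpA ?X //; congruence.
have [w' Hw'] := Lmin_of_common_ext Rq Rq' Y.
have Eq := SL_Lmin1_eq HG Gq Gq' Hw'; subst q'.
have [De _] := Lmin_dg He; have [De' _] := Lmin_dg He'.
have [Ee1 _] := cmp_inj_dgl Z1 Z2 (etrans De (esym De')) X.
by rewrite (Lmin_eq_fst He He' Ee1).
Qed.

Lemma smul_SL (F G : pset (M * M)) : finitely_aligned L -> in_SL F -> in_SL G -> in_SL (smul F G).
Proof.
move=> HL HF HG; split; first exact: smul_finite.
split=> [c | c c' Hc Hc' ne]; first exact: smul_sr.
split=> z Hz; apply: ne; first exact: smul_fst_disjoint HF HG Hc Hc' Hz.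
(* the second alignment condition is the first one for [G* F*] *)
have Hs : forall d, smul F G d -> smul (sstar G) (sstar F) (d.2, d.1).
  by move=> [d1 d2] Hd; rewrite -sstar_smul.
have := smul_fst_disjoint (sstar_SL HG) (sstar_SL HF) (Hs _ Hc) (Hs _ Hc') Hz.
by case: c c' {Hc Hc' Hz} => [? ?] [? ?] [-> ->].
Qed.

Lemma DF_smul_witness (G : pset (M * M)) (x : kp) (p q : M * M) : in_SL G -> G q ->
  kp_map x Z (dg q.2) = Some q.2 -> kp_map (theta G x) Z (dg p.2) = Some p.2 ->
  exists e, [/\ Lmin p.2 q.1 e, kp_map x (dg q.2) (dg (cmp q.2 e.2)) = Some e.2,
    kp_map x Z (dg (cmp q.2 e.2)) = Some (cmp q.2 e.2) &
    kp_map (theta G x) Z (dg (cmp q.1 e.2)) = Some (cmp q.1 e.2)].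
Proof.
move=> HG Gq Hq Hp.
have T := theta_replaces HG Gq Hq; have Sq := SL_sr HG Gq.
have Hh := replaces_head Hq Sq T.
have [e [He HJ]] := kp_Lmin Hp Hh.
have [_ [E2 [E3 _]]] := He; rewrite E3 in HJ.
have Sg := kp_seg_of_cmp Hh HJ E2.
set t := subv (joinv (dg p.2) (dg q.1)) (dg q.1).
have EJ : joinv (dg p.2) (dg q.1) = addv (dg q.1) t by rewrite addv_subv //; exact: lev_joinr.
have Im := proj2 (kp_some_dom Hq).
have It : le_inf (addv (dg q.2) t) (kp_deg x).
  by apply/(replaces_le_inf t T Im); rewrite -EJ; exact: proj2 (kp_some_dom HJ).
have S := replaces_seg Hq Sq T (lev0 t) It; rewrite !addv0 -EJ Sg in S.
have X := kp_cmp Hq (esym S).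
exists e; rewrite (kp_dg0 X) (kp_dg0 HJ); split=> //; exact: esym S.
Qed.

Lemma DF_smul (F G : pset (M * M)) (x : kp) : in_SL F -> in_SL G ->
  DF (smul F G) x <-> DF G x /\ DF F (theta G x).
Proof.
move=> HF HG; split=> [[c [[p [q [e [Fp [Gq [He ->]]]]]] Hx]] | [[q [Gq Hq]] [p [Fp Hp]]]].
- have [E1 [E2 [E3 _]]] := He; rewrite /= in Hx.
  have [Hq Sg] := kp_split_cmp Hx (etrans (esym (SL_sr HG Gq)) E2).
  split; first by exists q.
  have Y := replaces_val (theta_replaces HG Gq Hq) Sg; rewrite -E3 in Y.
  by exists p; split=> //; exact: proj1 (kp_split_cmp Y E1).
- have [e [He _ X _]] := DF_smul_witness HG Gq Hq Hp.
  by exists (cmp p.1 e.1, cmp q.2 e.2); split=> //; exists p, q, e.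
Qed.

Lemma theta_smul_seg (G : pset (M * M)) (x : kp) (p q e : M * M) N a : in_SL G -> G q ->
  kp_map x Z (dg q.2) = Some q.2 -> kp_map (theta G x) Z (dg p.2) = Some p.2 -> Lmin p.2 q.1 e ->
  kp_map x (dg q.2) (dg (cmp q.2 e.2)) = Some e.2 -> kp_map x (dg (cmp q.2 e.2)) N = Some a ->
  kp_map (theta G x) Z (addv (dg q.1) (subv N (dg q.2))) = Some (cmp q.1 (cmp e.2 a)) /\
  kp_map (theta G x) (dg p.2) (addv (dg q.1) (subv N (dg q.2))) = Some (cmp e.1 a).
Proof.
move=> HG Gq Hq Hp He S A.
have W := replaces_val (theta_replaces HG Gq Hq) (kp_cmp S A); split=> //.
have [E1 [E2 [E3 _]]] := He.
have Ra : sr e.2 = rg a := kp_sr_rg S A.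
have Sa : sr e.1 = rg a by rewrite (Lmin_sr He).
rewrite -cmpA // -E3 cmpA // in W.
by apply: kp_seg_of_cmp Hp W _; rewrite rg_cmp.
Qed.

(* Compare both products along a common extension [N] of the selected
   segments of [x]: [theta_G] carries [x(d (s e2), N)] to the segment of
   [theta_G x] after [m], where [agree F F'] applies. *)
Lemma agree_smul (F F' G G' : pset (M * M)) (x : kp) : valid G x -> valid G' x -> agree G G' x ->
  valid F (theta G x) -> valid F' (theta G x) -> agree F F' (theta G x) ->
  agree (smul F G) (smul F' G') x.
Proof.
move=> VG VG' AG VF VF' AF.
have Ey : theta G' x = theta G x by symmetry; apply: theta_agree.
case: VG VG' VF VF' => [HG [q [Gq Hq]]] [HG' [q' [Gq' Hq']]] [HF [p [Fp Hp]]] [HF' [p' [Fp' Hp']]].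
have [e [He S1 X1 _]] := DF_smul_witness HG Gq Hq Hp.
rewrite -Ey in Hp'; have [e' [He' S1' X1' _]] := DF_smul_witness HG' Gq' Hq' Hp'.
set N := joinv (dg (cmp q.2 e.2)) (dg (cmp q'.2 e'.2)).
have IN := le_inf_join (proj2 (kp_some_dom X1)) (proj2 (kp_some_dom X1')).
have [a A] := kp_defined (lev_joinl _ _) IN; have [b B] := kp_defined (lev_joinr _ _) IN.
exists (cmp p.1 e.1, cmp q.2 e.2), (cmp p'.1 e'.1, cmp q'.2 e'.2), N, a, b.
do 6 (split; first by [exists p, q, e | exists p', q', e' | ]).
have [W Z1] := theta_smul_seg HG Gq Hq Hp He S1 A.
have [W' Z2] := theta_smul_seg HG' Gq' Hq' Hp' He' S1' B.
rewrite Ey in Hp' W' Z2.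
have EM : addv (dg q.1) (subv N (dg q.2)) = addv (dg q'.1) (subv N (dg q'.2)).
  rewrite -(kp_dg0 W) -(kp_dg0 W').
  by rewrite (agree_any HG HG' AG Gq Gq' Hq Hq' (kp_cmp S1 A) (kp_cmp S1' B)).
rewrite -EM in Z2.
have [E1 _] := He; have [E1' _] := He'.
have Sa : sr e.1 = rg a by rewrite (Lmin_sr He); exact: kp_sr_rg S1 A.
have Sb : sr e'.1 = rg b by rewrite (Lmin_sr He'); exact: kp_sr_rg S1' B.
have Sp := SL_sr HF Fp; have Sp' := SL_sr HF' Fp'.
by rewrite /= !cmpA ?(agree_any HF HF' AF Fp Fp' Hp Hp' Z1 Z2) //; congruence.
Qed.

Lemma germ_mul_val (F G : pset (M * M)) (x : kp) (a b : germ) : finitely_aligned L ->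
  is_germ_of b G x -> is_germ_of a F (theta G x) -> is_germ_of (germ_mul a b) (smul F G) x.
Proof.
move=> HL Hb Ha.
have [HG DG] := proj1 Hb; have [HF DF'] := proj1 Ha.
have VFG : valid (smul F G) x by split; [exact: smul_SL | apply/DF_smul].
have [F' [G' [x' [B' [A' C']]]]] : exists F' G' x', is_germ_of b G' x' /\
    is_germ_of a F' (theta G' x') /\ is_germ_of (germ_mul a b) (smul F' G') x'.
  by rewrite /germ_mul; apply epsilon_spec; exists (mkgerm VFG), F, G, x.
have [Ex AG] := is_germ_eq Hb B'; subst x'.
rewrite -(theta_agree (proj1 Hb) (proj1 B') AG) in A'.
have [_ AF] := is_germ_eq Ha A'.
apply: (is_germ_transfer C' VFG); apply: agree_sym.
exact: agree_smul (proj1 Hb) (proj1 B') AG (proj1 Ha) (proj1 A') AF.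
Qed.

Lemma valid_sstar (F : pset (M * M)) (x : kp) : valid F x -> valid (sstar F) (theta F x).
Proof.
move=> [HF [p [Fp Hp]]]; split; first exact: sstar_SL.
by exists (p.2, p.1); split; [exact: sstar_in | exact: proj1 (theta_sstar_theta HF Fp Hp)].
Qed.

Lemma theta_sstar_thetaK F (x : kp) : valid F x -> theta (sstar F) (theta F x) = x.
Proof. by move=> [HF [p [Fp Hp]]]; have [] := theta_sstar_theta HF Fp Hp. Qed.

Lemma agree_sstar (F F' : pset (M * M)) (x : kp) : valid F x -> valid F' x -> agree F F' x ->
  agree (sstar F) (sstar F') (theta F x).
Proof.
move=> VF VF' AF.
have Ey : theta F' x = theta F x by symmetry; apply: theta_agree.
have [HF _] := VF; have [HF' _] := VF'.
case: AF => [p [q [N [a [b [Fp [Fq [Hp [Hq [A [B E]]]]]]]]]]].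
have T := theta_replaces HF Fp Hp; have T' := theta_replaces HF' Fq Hq; rewrite Ey in T'.
have W := replaces_val T A; have W' := replaces_val T' B.
have EM : addv (dg p.1) (subv N (dg p.2)) = addv (dg q.1) (subv N (dg q.2)).
  by rewrite -(kp_dg0 W) -(kp_dg0 W') E.
rewrite -EM in W'.
have Sp := SL_sr HF Fp; have Sq := SL_sr HF' Fq.
have Hh := replaces_head Hp Sp T; have Hh' := replaces_head Hq Sq T'.
exists (p.2, p.1), (q.2, q.1), (addv (dg p.1) (subv N (dg p.2))), a, b.
split; first exact: sstar_in.
split; first exact: sstar_in.
do 2 (split=> //).
split; first by apply: (kp_seg_of_cmp Hh W); rewrite Sp (kp_rg_seg Hp A).
split; first by apply: (kp_seg_of_cmp Hh' W'); rewrite Sq (kp_rg_seg Hq B).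
by have := kp_cmp Hq B; rewrite (kp_cmp Hp A); case.
Qed.

Lemma germ_inv_val (F : pset (M * M)) (x : kp) (a : germ) :
  is_germ_of a F x -> is_germ_of (germ_inv a) (sstar F) (theta F x).
Proof.
move=> Ha; have VS := valid_sstar (proj1 Ha).
have [F' [x' [A' C']]] : exists F' x', is_germ_of a F' x' /\
    is_germ_of (germ_inv a) (sstar F') (theta F' x').
  by rewrite /germ_inv; apply epsilon_spec; exists (mkgerm VS), F, x.
have [Ex AF] := is_germ_eq Ha A'; subst x'.
have Et := theta_agree (proj1 Ha) (proj1 A') AF; rewrite -Et in C'.
apply: (is_germ_transfer C' VS); rewrite Et.
exact: agree_sstar (proj1 A') (proj1 Ha) (agree_sym AF).
Qed.

Lemma Psi_sstar (F : pset (M * M)) : in_SL F -> Psi (sstar F) = gop_inv (Psi F).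
Proof.
move=> HF; apply: pset_ext => g; split=> [[x [Dx Hg]] | [a [[x [Dx Ha]] ->]]].
- have VS : valid (sstar F) x := proj1 Hg.
  have VSS := valid_sstar VS; rewrite sstar_sstar in VSS.
  exists (mkgerm VSS); split; first exact: Psi_mkgerm.
  have := germ_inv_val (is_germ_mkgerm VSS).
  by have := theta_sstar_thetaK VS; rewrite sstar_sstar => ->; exact: germ_uniq Hg.
- by exists (theta F x); split; [case: (proj1 (germ_inv_val Ha)) | exact: germ_inv_val].
Qed.

Lemma Psi_smul (F G : pset (M * M)) : finitely_aligned L -> in_SL F -> in_SL G ->
  Psi (smul F G) = gop_mul (Psi F) (Psi G).
Proof.
move=> HL HF HG; apply: pset_ext => g; split.
- move=> [x [/(DF_smul _ HF HG) [DG DF'] Hg]].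
  have VG : valid G x := conj HG DG; have VF : valid F (theta G x) := conj HF DF'.
  exists (mkgerm VF), (mkgerm VG); do 2 (split; first exact: Psi_mkgerm).
  rewrite (germ_s_val (is_germ_mkgerm VF)) (germ_r_val (is_germ_mkgerm VG)); split=> //.
  exact: germ_uniq Hg (germ_mul_val HL (is_germ_mkgerm VG) (is_germ_mkgerm VF)).
- move=> [a [b [[y [Dy Ha]] [[x [Dx Hb]] [Es ->]]]]].
  rewrite (germ_s_val Ha) (germ_r_val Hb) in Es; subst y.
  have H1 := germ_mul_val HL Hb Ha.
  by exists x; split; [case: (proj1 H1) | ].
Qed.

(* Evaluate at the finite paths [x_m], [(l, m)] in [F]. *)
Lemma Psi_sub (F G : pset (M * M)) : in_SL F -> in_SL G -> Psi F = Psi G -> forall p, F p -> G p.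
Proof.
move=> HF HG E p Fp.
have V : valid F (path_of_mor p.2) by split=> //; exists p; split=> //; exact: path_of_mor_val.
have : Psi G (mkgerm V) by rewrite -E; exact: Psi_mkgerm.
move=> [x' [_ Hg]]; have [Ex AFG] := is_germ_eq (is_germ_mkgerm V) Hg; subst x'.
have [p0 [q [N [a [b [Fp0 [Gq [Hp0 [Hq [A [B Eab]]]]]]]]]]] := AFG.
rewrite (SL_selected_uniq HF Fp0 Fp Hp0 (path_of_mor_val p.2)) in A Eab.
have V2 : valid G (path_of_mor q.2) by split=> //; exists q; split=> //; exact: path_of_mor_val.
have : Psi F (mkgerm V2) by rewrite E; exact: Psi_mkgerm.
move=> [z [Dz Hz]]; have [Ez _] := is_germ_eq (is_germ_mkgerm V2) Hz; subst z.
have [p' [Fp' Hp']] := Dz.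
have [e1 [R1 E1]] := path_of_mor_prefix Hq.
have [e2 [R2 E2]] := path_of_mor_prefix Hp'.
have Se2 : sr e2 = rg e1 by rewrite -R1 E2 (sr_cmp R2).
have Ecmp : p.2 = cmp p'.2 (cmp e2 e1) by rewrite -(cmpA R2 Se2) -E2 -E1.
have Ep := SL_ext2_eq HF Fp' Fp (etrans R2 (esym (rg_cmp Se2))) Ecmp.
subst p'.
have De1 : dg e1 = Z.
  have D1 := dg_cmp R1; have D2 := dg_cmp R2; rewrite -E1 in D1; rewrite -E2 in D2.
  vext i; have := f_equal (fun f => f i) D1; have := f_equal (fun f => f i) D2.
  by rewrite /addv /zerov; lia.
rewrite -(dg0_rg_id De1) -R1 cmp_id_r in E1.
rewrite -E1 in B.
have EN : N = dg p.2.
  by vext i; have := proj1 (kp_some_dom A) i; have := proj2 (kp_some_dom A) i => /=; lia.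
subst N; have Hs := kp_sr (path_of_mor_val p.2).
rewrite Hs in A; rewrite Hs in B; case: A => Ea; case: B => Eb; subst a b.
have X1 : cmp p.1 (sr p.2) = p.1 by rewrite -(SL_sr HF Fp) cmp_id_r.
have X2 : cmp q.1 (sr p.2) = q.1 by rewrite E1 -(SL_sr HG Gq) cmp_id_r.
rewrite X1 X2 in Eab.
by rewrite (injective_projections p q Eab E1).
Qed.

(** * Topology *)

Definition X_subbasic : pset (pset kp) :=
  fun V => exists F, in_SL F /\ (V = DF F \/ V = Defs.setC (DF F)).
Definition G_subbasic : pset (pset germ) :=
  fun V => exists F, in_SL F /\ (V = Psi F \/ V = Defs.setC (Psi F)).
Definition polar (T : Type) (b : bool) (A : pset T) : pset T := if b then A else Defs.setC A.

Lemma X_subbasic_polar H b : in_SL H -> X_subbasic (polar b (DF H)).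
Proof. by move=> HH; exists H; split=> //; case: b; [left | right]. Qed.

Lemma G_subbasic_polar K b : in_SL K -> G_subbasic (polar b (Psi K)).
Proof. by move=> HK; exists K; split=> //; case: b; [left | right]. Qed.

Definition src_idem (H : pset (M * M)) : pset (M * M) := fun r => exists q, H q /\ r = (q.2, q.2).

Lemma src_idem_SL H : in_SL H -> in_SL (src_idem H).
Proof.
move=> HH; have [[sH HsH] _] := HH; split; [|split].
- exists (map (fun q => (q.2, q.2)) sH) => r [q [Hq ->]].
  by apply/in_map_iff; exists q; split=> //; exact: HsH.
- by move=> r [q [Hq ->]].
- move=> r r' [q [Hq ->]] [q' [Hq' ->]] ne.
  suff W : forall z, ~ Lmin q.2 q'.2 z by [].
  by move=> z Hz; apply: ne; rewrite (SL_Lmin2_eq HH Hq Hq' Hz).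
Qed.

Lemma agree_smul_src_idem (F H : pset (M * M)) (x : kp) : finitely_aligned L -> in_SL H ->
  valid F x -> DF H x -> valid (smul F (src_idem H)) x /\ agree F (smul F (src_idem H)) x.
Proof.
move=> HL HH [HF [p [Fp Hp]]] [h [Hh Hx]].
have [e [He HJ]] := kp_Lmin Hp Hx; have [E1 [E2 [E3 _]]] := He.
have FQ : smul F (src_idem H) (cmp p.1 e.1, cmp h.2 e.2).
  by exists p, (h.2, h.2), e; split=> //; split=> //; exists h.
have HJ' : kp_map x Z (dg (cmp h.2 e.2)) = Some (cmp h.2 e.2) by rewrite -E3 (kp_dg0 HJ).
split; first by split; [exact: smul_SL (src_idem_SL HH) | exists (cmp p.1 e.1, cmp h.2 e.2)].
exists p, (cmp p.1 e.1, cmp h.2 e.2), (joinv (dg p.2) (dg h.2)), e.1, (sr (cmp h.2 e.2)).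
do 4 (split=> //); split; first exact: kp_seg_of_cmp Hp HJ E1.
split; first by rewrite /= -(kp_dg0 HJ) E3; exact: kp_sr HJ'.
have Es := Lmin_sr He.
by rewrite /= (sr_cmp E2) -Es -(sr_cmp (l := p.1) (m := e.1)) ?cmp_id_r // (SL_sr HF Fp).
Qed.

Lemma Psi_smul_src_idem (F H : pset (M * M)) (c : germ) (x : kp) : finitely_aligned L -> in_SL H ->
  is_germ_of c F x -> (Psi (smul F (src_idem H)) c <-> DF H x).
Proof.
move=> HL HH Hc; split=> [[x' [Dx' Hc']] | Dx].
- have [Ex _] := is_germ_eq Hc Hc'; subst x'.
  have [r [[p [q [e [Fp [[h [Hh ->]] [[E1 [E2 _]] ->]]]]]] Hx]] := Dx'.
  by exists h; split=> //; exact: proj1 (kp_split_cmp Hx E2).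
- have [VQ A] := agree_smul_src_idem HL HH (proj1 Hc) Dx.
  by exists x; split; [case: VQ | exact: is_germ_transfer Hc VQ A].
Qed.

Lemma agree_cylinder F K (x u : kp) p q a b : in_SL F -> in_SL K -> F p -> K q ->
  sr p.2 = rg a -> sr q.2 = rg b -> cmp p.2 a = cmp q.2 b ->
  kp_map x Z (dg (cmp p.2 a)) = Some (cmp p.2 a) ->
  kp_map u Z (dg (cmp p.2 a)) = Some (cmp p.2 a) -> agree F K u -> agree F K x.
Proof.
move=> HF HK Fp Kq Ra Rb E Hx Hu AK.
have Hx' : kp_map x Z (dg (cmp p.2 a)) = Some (cmp q.2 b) by rewrite Hx E.
have Hu' : kp_map u Z (dg (cmp p.2 a)) = Some (cmp q.2 b) by rewrite Hu E.
have [X1 X2] := kp_split_cmp Hx Ra; have [X3 X4] := kp_split_cmp Hx' Rb.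
have [U1 U2] := kp_split_cmp Hu Ra; have [U3 U4] := kp_split_cmp Hu' Rb.
exists p, q, (dg (cmp p.2 a)), a, b; do !split=> //.
exact: (agree_any HF HK AK Fp Kq U1 U3 U2 U4).
Qed.

Lemma Psi_germ_iff F K (t : germ) (u : kp) : in_SL K -> is_germ_of t F u ->
  (Psi K t <-> DF K u /\ agree F K u).
Proof.
move=> HK Ht; split=> [[u' [Du Ht']] | [Du AK]].
  by have [Eu AK] := is_germ_eq Ht Ht'; subst u'.
exact: Psi_of_germ (is_germ_transfer Ht (conj HK Du) AK).
Qed.

(* Near [x], membership of the germs of [F] in [Psi K] is constant: if [x] is
   in [D_K] it only depends on the common extension [v] of the segments of [x]
   selected by [F] and [K], and otherwise [D_K] misses a neighbourhood of [x]. *)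
Lemma germ_s_nbhd F (a : germ) (x : kp) V' : in_SL F -> is_germ_of a F x -> G_subbasic V' -> V' a ->
  exists H b, in_SL H /\ polar b (DF H) x /\
    forall u t, polar b (DF H) u -> is_germ_of t F u -> V' t.
Proof.
move=> HF Ha [K [HK EV]] Va; have [p [Fp Hp]] := proj2 (proj1 Ha).
case: (classic (DF K x)) => [[q [Kq Hq]] | nD]; last first.
  exists K, false; do 2 (split=> //); move=> u t nDu Ht.
  case: EV Va => -> Va; first by case: nD; exact: Psi_DF Va Ha.
  by move=> Pt; apply: nDu; exact: Psi_DF Pt Ht.
have [e [He HJ]] := kp_Lmin Hp Hq; have [E1 [E2 [E3 _]]] := He.
have Hv : kp_map x Z (dg (cmp p.2 e.1)) = Some (cmp p.2 e.1) by rewrite (kp_dg0 HJ).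
have Hcyl u t : kp_map u Z (dg (cmp p.2 e.1)) = Some (cmp p.2 e.1) -> is_germ_of t F u ->
    (Psi K t <-> Psi K a).
  move=> Hu Ht; rewrite (Psi_germ_iff HK Ht) (Psi_germ_iff HK Ha).
  have Hu' : kp_map u Z (dg (cmp p.2 e.1)) = Some (cmp q.2 e.2) by rewrite Hu E3.
  have DKu : DF K u by exists q; split=> //; exact: proj1 (kp_split_cmp Hu' E2).
  have DKx : DF K x by exists q.
  split=> -[_ A]; split=> //.
  - exact: (agree_cylinder HF HK Fp Kq E1 E2 E3 Hv Hu A).
  - exact: (agree_cylinder HF HK Fp Kq E1 E2 E3 Hu Hv A).
exists (diag1 (cmp p.2 e.1)), true; split; first exact: diag1_SL.
split=> [| u t /DF_diag1 Hu Ht]; first exact/DF_diag1.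
by have := Hcyl u t Hu Ht; case: EV Va => -> /=; rewrite /Defs.setC; tauto.
Qed.

Lemma valid_theta_sstar F (u : kp) : in_SL F -> DF (sstar F) u ->
  valid F (theta (sstar F) u) /\ theta F (theta (sstar F) u) = u.
Proof.
move=> HF Du; have VS : valid (sstar F) u := conj (sstar_SL HF) Du.
have V := valid_sstar VS; rewrite sstar_sstar in V; split=> //.
by have := theta_sstar_thetaK VS; rewrite sstar_sstar.
Qed.

(* Transport the neighbourhood of [germ_s_nbhd] along [theta_F], using
   [D_{H F*} = D_{F*} n theta_{F*}^{-1}(D_H)]. *)
Lemma germ_r_nbhd F (a : germ) (x : kp) V' : finitely_aligned L -> in_SL F ->
  is_germ_of a F x -> G_subbasic V' -> V' a ->
  exists W, X_subbasic W /\ W (theta F x) /\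
    forall u t, DF (sstar F) u -> W u -> is_germ_of t F (theta (sstar F) u) -> V' t.
Proof.
move=> HL HF Ha SV Va.
have [H [b [HH [Wx Hk]]]] := germ_s_nbhd HF Ha SV Va.
have HS := sstar_SL HF.
have Tr u : DF (sstar F) u ->
    (polar b (DF (smul H (sstar F))) u <-> polar b (DF H) (theta (sstar F) u)).
  by move=> Du; have := DF_smul u HH HS; case: b {Wx Hk} => /=; rewrite /Defs.setC; tauto.
exists (polar b (DF (smul H (sstar F)))); split; first exact: X_subbasic_polar (smul_SL HL HH HS).
have Dy : DF (sstar F) (theta F x) := proj2 (valid_sstar (proj1 Ha)).
split; first by apply/(Tr _ Dy); rewrite theta_sstar_thetaK //; case: Ha.
move=> u t Du Wu; apply: Hk; exact/Tr.
Qed.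

Definition le_opt (a : nat) (d : option nat) : Prop :=
  if d is Some b then is_true (a <= b) else True.

Lemma le_opt_inj (d d' : option nat) : (forall a, le_opt a d <-> le_opt a d') -> d = d'.
Proof.
case: d => [b|]; case: d' => [c|] //= H.
- have /H /= bc := leqnn b; have /H /= cb := leqnn c.
  by congr Some; apply/eqP; rewrite eqn_leq bc cb.
- by have /= := proj2 (H b.+1) I; rewrite ltnn.
- by have /= := proj1 (H c.+1) I; rewrite ltnn.
Qed.

Definition unitv (i : 'I_k) (a : nat) : V := fun j => if j == i then a else 0.

Lemma le_inf_unitv d i a : le_inf (unitv i a) d <-> le_opt a (d i).
Proof.
split=> [/(_ i) | H j]; first by rewrite /unitv eqxx.
rewrite /unitv; case: (eqVneq j i) => [-> // | _]; by case: (d j).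
Qed.

Lemma kp_deg_eq (x y : kp) : (forall n, kp_map x Z n = kp_map y Z n) -> kp_deg x = kp_deg y.
Proof.
move=> H; have Hi n : le_inf n (kp_deg x) <-> le_inf n (kp_deg y).
  have := kp_dom x Z n; have := kp_dom y Z n; rewrite H.
  by have := lev0 n; tauto.
by vext i; apply: le_opt_inj => a; rewrite -!le_inf_unitv.
Qed.

Lemma kpath_separate (x y : kp) : x <> y -> exists n v,
  (kp_map x Z n = Some v /\ kp_map y Z n <> Some v) \/
  (kp_map y Z n = Some v /\ kp_map x Z n <> Some v).
Proof.
move=> ne; apply: NNPP => Hn; apply: ne.
have E n : kp_map x Z n = kp_map y Z n.
  case Ex: (kp_map x Z n) => [v|]; case Ey: (kp_map y Z n) => [w|] //.
  - case: (classic (v = w)) => [-> // | vw]; case: Hn; exists n, v; left.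
    by rewrite Ey; split=> // -[wv]; apply: vw.
  - by case: Hn; exists n, v; left; rewrite Ex Ey.
  - by case: Hn; exists n, w; right; rewrite Ex Ey.
apply: (kpath_eq_from (d0 := Z)); first exact: kp_deg_eq.
  by move=> i; case: (kp_deg x i).
by move=> n _ _.
Qed.

(* Distinct germs of [Psi F] sit over distinct paths, which a cylinder
   [D_{(v, v)}] separates; [Psi (F Q)] with [Q] the source idempotent of
   that cylinder then separates the germs. *)
Lemma Psi_hausdorff F : finitely_aligned L -> in_SL F -> hausdorff_in (@G_open k L) (Psi F).
Proof.
move=> HL HF a b [x [Dx Ha]] [y [Dy Hb]] ne.
have Hxy : x <> y by move=> Exy; subst y; apply: ne; exact: germ_uniq Ha Hb.
have [n [v Hv]] := kpath_separate Hxy.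
set K := smul F (src_idem (diag1 v)).
have HK : in_SL K := smul_SL HL HF (src_idem_SL (diag1_SL v)).
have Ra := Psi_smul_src_idem HL (diag1_SL v) Ha; have Rb := Psi_smul_src_idem HL (diag1_SL v) Hb.
rewrite !DF_diag1 in Ra Rb.
have OK := gen_open_subbasic (G_subbasic_polar true HK).
have OC := gen_open_subbasic (G_subbasic_polar false HK).
case: Hv => [[X1 X2] | [X1 X2]].
- exists (Psi K), (Defs.setC (Psi K)); do 2 (split=> //).
  split; first by apply/Ra; rewrite (kp_dg0 X1).
  by split=> [/Rb | c _ //]; rewrite (kp_dg0 X1).
- exists (Defs.setC (Psi K)), (Psi K); do 2 (split=> //).
  split=> [/Ra|]; first by rewrite (kp_dg0 X1).
  by split=> [| c _ h1 h2 //]; apply/Rb; rewrite (kp_dg0 X1).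
Qed.

Lemma Psi_homeo_onto_image F (g : germ -> kp) (Dom : pset kp) (R : kp -> germ -> Prop) : in_SL F ->
  (forall a b, Psi F a -> Psi F b -> g a = g b -> a = b) ->
  (forall H, in_SL H -> exists K, in_SL K /\ forall c, Psi F c -> (Psi K c <-> DF H (g c))) ->
  X_subbasic Dom -> (forall a, Psi F a -> Dom (g a)) ->
  (forall u, Dom u -> exists t, Psi F t /\ g t = u /\ R u t) ->
  (forall a V', Psi F a -> G_subbasic V' -> V' a ->
     exists W, X_subbasic W /\ W (g a) /\ forall u t, Dom u -> W u -> R u t -> V' t) ->
  homeo_onto_image (@G_open k L) (@X_open k L) (Psi F) g.
Proof.
move=> HF ginj gpre HD gD glift gkey; split=> //; split.
  2: exact: (gen_open_image (ST := G_subbasic) (SU := X_subbasic) HD gD glift gkey).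
move=> W HW; exists (fun c => Psi F c /\ W (g c)); split; last by move=> c; tauto.
apply: (gen_open_preimage (ST := G_subbasic) (SU := X_subbasic)) => //.
  exact: (G_subbasic_polar true HF).
move=> _ [H [HH [-> | ->]]]; have [K [HK EK]] := gpre H HH.
- by exists (Psi K); split; [exact: (G_subbasic_polar true HK) | ].
- exists (Defs.setC (Psi K)); split; first exact: (G_subbasic_polar false HK).
  by move=> c Pc; rewrite /Defs.setC; have := EK c Pc; tauto.
Qed.

Lemma germ_s_homeo F : finitely_aligned L -> in_SL F ->
  homeo_onto_image (@G_open k L) (@X_open k L) (Psi F) (@germ_s k L).
Proof.
move=> HL HF; apply: (Psi_homeo_onto_image (Dom := DF F) (R := fun u t => is_germ_of t F u)) => //.
- move=> a b [x [_ Ha]] [y [_ Hb]].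
  by rewrite (germ_s_val Ha) (germ_s_val Hb) => Exy; subst y; exact: germ_uniq Ha Hb.
- move=> H HH; exists (smul F (src_idem H)); split; first exact: smul_SL (src_idem_SL HH).
  by move=> c [x [_ Hc]]; rewrite (Psi_smul_src_idem HL HH Hc) (germ_s_val Hc).
- by exists F; split=> //; left.
- by move=> a [x [Dx Ha]]; rewrite (germ_s_val Ha).
- move=> u Du; have Vu : valid F u := conj HF Du.
  by exists (mkgerm Vu); split; [exact: Psi_mkgerm | rewrite (germ_s_val (is_germ_mkgerm Vu))].
- move=> a V' [x [_ Ha]] SV Va; rewrite (germ_s_val Ha).
  have [H [b [HH [Wx Hk]]]] := germ_s_nbhd HF Ha SV Va.
  by exists (polar b (DF H)); split; [exact: X_subbasic_polar | split=> // u t _; exact: Hk].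
Qed.

Lemma germ_r_homeo F : finitely_aligned L -> in_SL F ->
  homeo_onto_image (@G_open k L) (@X_open k L) (Psi F) (@germ_r k L).
Proof.
move=> HL HF; apply: (Psi_homeo_onto_image (Dom := DF (sstar F))
  (R := fun u t => is_germ_of t F (theta (sstar F) u))) => //.
- move=> a b [x [_ Ha]] [y [_ Hb]]; rewrite (germ_r_val Ha) (germ_r_val Hb) => E.
  have Exy : x = y by rewrite -(theta_sstar_thetaK (proj1 Ha)) -(theta_sstar_thetaK (proj1 Hb)) E.
  by subst y; exact: germ_uniq Ha Hb.
- move=> H HH; have HHF := smul_SL HL HH HF.
  exists (smul F (src_idem (smul H F))); split; first exact: smul_SL (src_idem_SL HHF).
  move=> c [x [Dx Hc]]; rewrite (Psi_smul_src_idem HL HHF Hc) (germ_r_val Hc).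
  by have := DF_smul x HH HF; tauto.
- by exists (sstar F); split; [exact: sstar_SL | left].
- by move=> a [x [_ Ha]]; rewrite (germ_r_val Ha); exact: proj2 (valid_sstar (proj1 Ha)).
- move=> u Du; have [Vu Eu] := valid_theta_sstar HF Du.
  by exists (mkgerm Vu); split; [exact: Psi_mkgerm | rewrite (germ_r_val (is_germ_mkgerm Vu))].
- by move=> a V' [x [_ Ha]] SV Va; rewrite (germ_r_val Ha); exact: germ_r_nbhd HL HF Ha SV Va.
Qed.

Lemma in_Gop_Psi (F : pset (M * M)) : finitely_aligned L -> in_SL F -> in_Gop (Psi F).
Proof.
move=> HL HF; split; first exact: gen_open_subbasic (G_subbasic_polar true HF).
split; first exact: Psi_hausdorff.
by split; [exact: germ_r_homeo | exact: germ_s_homeo].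
Qed.

End GermGroupoid.

Theorem proposition6p7 (k : nat) (L : kgraph k) (HL : finitely_aligned L) :
  (forall F : pset (Mor L * Mor L), in_SL F -> in_Gop (Psi F)) /\
  (forall F G : pset (Mor L * Mor L), in_SL F -> in_SL G ->
     Psi (smul F G) = gop_mul (Psi F) (Psi G)) /\
  (forall F : pset (Mor L * Mor L), in_SL F -> Psi (sstar F) = gop_inv (Psi F)) /\
  (forall F G : pset (Mor L * Mor L), in_SL F -> in_SL G -> Psi F = Psi G -> F = G).
Proof.
split; first by move=> F; exact: in_Gop_Psi.
split; first by move=> F G; exact: Psi_smul.
split; first by move=> F; exact: Psi_sstar.
move=> F G HF HG E; apply: pset_ext => p.
by split; [exact: (Psi_sub HF HG E (p := p)) | exact: (Psi_sub HG HF (esym E) (p := p))].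
Qed.
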